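(* For each $\lambda\in\mathbb C$ there exists a unique solution $w_\lambda$ of the boundary value problem $\ell(w)=\lambda w$ on $(a,b)$, $\lim_{x\downarrow a}w(x)=1$, $\lim_{x\downarrow a}w^{[1]}(x)=0$. Moreover, for each fixed $x\in(a,b)$, the map $\lambda\mapsto w_\lambda(x)$ is an entire function of exponential type.
   Context: Let $-\infty\le a<b\le\infty$ and let $p,r:(a,b)\to(0,\infty)$ be functions such that $p,p',r,r'$ are locally absolutely continuous on $(a,b)$. Write $\ell u=-\frac{1}{r}(p u')'$ and $u^{[1]}=p u'$. It is assumed that $\int_a^c\int_y^c \frac{dx}{p(x)}\,r(y)\,dy<\infty$ for some $c\in(a,b)$. *)

From Stdlib Require Import Reals Lra List ClassicalEpsilon.
Open Scope R_scope.

(** Endpoints: [a : option R] with [None] meaning -infinity,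
    [b : option R] with [None] meaning +infinity. *)
Definition inI (a b : option R) (x : R) : Prop :=
  (match a with Some a0 => a0 < x | None => True end) /\
  (match b with Some b0 => x < b0 | None => True end).

Definition Cplx : Type := (R * R)%type.
Definition Cadd (z w : Cplx) : Cplx := (fst z + fst w, snd z + snd w).
Definition Csub (z w : Cplx) : Cplx := (fst z - fst w, snd z - snd w).
Definition Cmul (z w : Cplx) : Cplx :=
  (fst z * fst w - snd z * snd w, fst z * snd w + snd z * fst w).
Definition Cnorm (z : Cplx) : R := sqrt (fst z * fst z + snd z * snd z).
Definition C1 : Cplx := (1, 0).
Definition C0 : Cplx := (0, 0).

(** Absolute continuity on [c,d]: finite families of non-overlapping
    subintervals (listed in increasing order). *)
Fixpoint nonoverlap (l : list (R * R)) : Prop :=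
  match l with
  | nil => True
  | i :: t =>
      fst i <= snd i /\
      match t with
      | nil => True
      | j :: _ => snd i <= fst j
      end /\ nonoverlap t
  end.

Fixpoint total_length (l : list (R * R)) : R :=
  match l with nil => 0 | i :: t => (snd i - fst i) + total_length t end.

Fixpoint total_var (f : R -> R) (l : list (R * R)) : R :=
  match l with nil => 0 | i :: t => Rabs (f (snd i) - f (fst i)) + total_var f t end.

Definition abs_cont_on (f : R -> R) (c d : R) : Prop :=
  forall eps, 0 < eps -> exists delta, 0 < delta /\
    forall l : list (R * R),
      (forall i, In i l -> c <= fst i /\ snd i <= d) ->
      nonoverlap l ->
      total_length l < delta -> total_var f l < eps.

Definition loc_abs_cont (a b : option R) (f : R -> R) : Prop :=
  forall c d, inI a b c -> inI a b d -> c <= d -> abs_cont_on f c d.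

Definition loc_AC_with_AC_deriv (a b : option R) (f : R -> R) : Prop :=
  loc_abs_cont a b f /\
  exists f' : R -> R,
    (forall x, inI a b x -> derivable_pt_lim f x (f' x)) /\ loc_abs_cont a b f'.

Definition Rint (f : R -> R) (u v : R) : R :=
  epsilon (inhabits 0)
    (fun I => exists pr : Riemann_integrable f u v, RiemannInt pr = I).

(** The hypothesis  int_a^c int_y^c dx/p(x) r(y) dy < infinity,
    as boundedness of the (nonnegative-integrand) partial integrals. *)
Definition integrability_hyp (a b : option R) (p r : R -> R) : Prop :=
  exists c, inI a b c /\ exists M : R,
    forall t, inI a b t -> t <= c ->
      Rint (fun y => Rint (fun x => / p x) y c * r y) t c <= M.

(** w solves  l(w) = lam w  on (a,b), where l u = -(1/r)(p u')',
    with dw the derivative of w (so p*dw is the quasi-derivative w^[1]). *)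
Definition solves (a b : option R) (p r : R -> R) (lam : Cplx)
  (w dw : R -> Cplx) : Prop :=
  forall x, inI a b x ->
    derivable_pt_lim (fun t => fst (w t)) x (fst (dw x)) /\
    derivable_pt_lim (fun t => snd (w t)) x (snd (dw x)) /\
    derivable_pt_lim (fun t => p t * fst (dw t)) x (- (r x * fst (Cmul lam (w x)))) /\
    derivable_pt_lim (fun t => p t * snd (dw t)) x (- (r x * snd (Cmul lam (w x)))).

Definition lim_at_left_end (a b : option R) (f : R -> Cplx) (L : Cplx) : Prop :=
  forall eps, 0 < eps -> exists t, inI a b t /\
    forall x, inI a b x -> x < t -> Cnorm (Csub (f x) L) < eps.

Definition solves_bvp (a b : option R) (p r : R -> R) (lam : Cplx)
  (w : R -> Cplx) : Prop :=
  exists dw : R -> Cplx,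
    solves a b p r lam w dw /\
    lim_at_left_end a b w C1 /\
    lim_at_left_end a b (fun x => (p x * fst (dw x), p x * snd (dw x))) C0.

Definition entire (f : Cplx -> Cplx) : Prop :=
  forall z, exists f'z : Cplx,
    forall eps, 0 < eps -> exists delta, 0 < delta /\
      forall h, h <> C0 -> Cnorm h < delta ->
        Cnorm (Csub (Csub (f (Cadd z h)) (f z)) (Cmul f'z h)) <= eps * Cnorm h.

Definition exponential_type (f : Cplx -> Cplx) : Prop :=
  exists A B : R, forall z, Cnorm (f z) <= A * exp (B * Cnorm z).

(** The solution is the series [w_λ = Σ_n (-λ)^n U_n] with [U_0 = 1] and
    [U_(n+1)(x) = ∫_a^x (1/p(s)) ∫_a^s r(y) U_n(y) dy ds], all integrals being
    improper at [a].  The integrability hypothesis says exactly that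
    [Q := U_1] is finite, and an induction gives [0 <= U_n <= Q^n/n!].  Hence
    the series and its quasi-derivative converge locally uniformly in [x], [w_λ]
    solves the boundary value problem, and for fixed [x] it is a power series in
    [λ] whose coefficients are bounded by [Q(x)^n/n!], i.e. an entire function of
    exponential type.  For uniqueness, the difference [v] of two solutions has
    vanishing boundary data; feeding a bound [|v| <= C] through the integral
    equation [n] times gives [|v| <= C |λ|^n Q^n/n!], which tends to [0]. *)

From Pilot Require Import Defs.
From Stdlib Require Import Reals Lra Lia Classical ClassicalEpsilon Factorial Ranalysis5.
From Coquelicot Require Import Coquelicot.
Open Scope R_scope.

Lemma inI_between a b x y z : inI a b x -> inI a b y -> x <= z <= y -> inI a b z.
Proof. unfold inI; destruct a as [a0|], b as [b0|]; intuition lra. Qed.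

Lemma inI_between_min_max a b x y z :
  inI a b x -> inI a b y -> Rmin x y <= z <= Rmax x y -> inI a b z.
Proof.
  intros Hx Hy Hz. unfold Rmin, Rmax in Hz. destruct (Rle_dec x y).
  - exact (inI_between a b x y z Hx Hy Hz).
  - apply (inI_between a b y x z Hy Hx). lra.
Qed.

Lemma inI_ball a b x :
  inI a b x -> exists d, 0 < d /\ forall y, Rabs (y - x) < d -> inI a b y.
Proof.
  unfold inI; destruct a as [a0|], b as [b0|]; intros [H1 H2].
  - exists (Rmin (x - a0) (b0 - x)). split; [apply Rmin_glb_lt; lra|].
    intros y Hy. pose proof (Rmin_l (x - a0) (b0 - x)). pose proof (Rmin_r (x - a0) (b0 - x)).
    apply Rabs_def2 in Hy. lra.
  - exists (x - a0). split; [lra|]. intros y Hy. apply Rabs_def2 in Hy. lra.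
  - exists (b0 - x). split; [lra|]. intros y Hy. apply Rabs_def2 in Hy. lra.
  - exists 1. split; [lra|]. intros; tauto.
Qed.

Lemma inI_exists_lt a b x : inI a b x -> exists t, inI a b t /\ t < x.
Proof.
  intros H. destruct (inI_ball _ _ _ H) as [d [Hd Hy]].
  exists (x - d/2). split; [|lra]. apply Hy. rewrite Rabs_left; lra.
Qed.

Lemma inI_exists_gt a b x : inI a b x -> exists t, inI a b t /\ x < t.
Proof.
  intros H. destruct (inI_ball _ _ _ H) as [d [Hd Hy]].
  exists (x + d/2). split; [|lra]. apply Hy. rewrite Rabs_right; lra.
Qed.

Lemma inI_locally a b x : inI a b x -> locally x (fun y => inI a b y).
Proof.
  intros H. destruct (inI_ball _ _ _ H) as [d [Hd Hy]].
  exists (mkposreal d Hd). intros y Hy'. apply Hy. exact Hy'.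
Qed.

Lemma inI_min a b x y : inI a b x -> inI a b y -> inI a b (Rmin x y).
Proof. intros; apply Rmin_case; auto. Qed.

(* Coquelicot's lemmas are stated for arbitrary normed modules and do not unify
   with functions [R -> R] without the instances being given explicitly. *)

Lemma continuous_Rmult (f g : R -> R) x :
  continuous f x -> continuous g x -> continuous (fun y => f y * g y) x.
Proof. apply (@continuous_mult R_UniformSpace R_AbsRing f g x). Qed.

Lemma continuous_Rplus (f g : R -> R) x :
  continuous f x -> continuous g x -> continuous (fun y => f y + g y) x.
Proof. apply (@continuous_plus R_UniformSpace R_AbsRing R_NormedModule f g x). Qed.

Lemma continuous_Rminus (f g : R -> R) x :
  continuous f x -> continuous g x -> continuous (fun y => f y - g y) x.
Proof. apply (@continuous_minus R_UniformSpace R_AbsRing R_NormedModule f g x). Qed.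

Lemma continuous_Ropp (f : R -> R) x : continuous f x -> continuous (fun y => - f y) x.
Proof. apply (@continuous_opp R_UniformSpace R_AbsRing R_NormedModule f x). Qed.

Lemma continuous_Rconst (k : R) x : continuous (fun _ : R => k) x.
Proof. apply (@continuous_const R_UniformSpace R_UniformSpace k x). Qed.

Lemma continuous_Rdiv (f g : R -> R) x :
  continuous f x -> continuous g x -> g x <> 0 -> continuous (fun y => f y / g y) x.
Proof.
  intros. unfold Rdiv. apply continuous_Rmult; auto. apply continuous_Rinv_comp; auto.
Qed.

Lemma continuous_Rpow (f : R -> R) n x : continuous f x -> continuous (fun y => f y ^ n) x.
Proof.
  intros H. induction n; simpl; [apply continuous_Rconst | apply continuous_Rmult; auto].
Qed.

Lemma is_derive_continuous (f : R -> R) x l : is_derive f x l -> continuous f x.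
Proof. intros H. apply (@ex_derive_continuous R_AbsRing R_NormedModule). exists l; exact H. Qed.

Lemma is_derive_Rmult (f g : R -> R) x df dg : is_derive f x df -> is_derive g x dg ->
  is_derive (fun y => f y * g y) x (df * g x + f x * dg).
Proof.
  intros H1 H2. apply is_derive_Reals. apply is_derive_Reals in H1. apply is_derive_Reals in H2.
  exact (derivable_pt_lim_mult f g x df dg H1 H2).
Qed.

Lemma is_derive_Rconst (k : R) x : is_derive (fun _ : R => k) x 0.
Proof. apply is_derive_Reals. apply derivable_pt_lim_const. Qed.

Lemma is_derive_Rscal (f : R -> R) k x df :
  is_derive f x df -> is_derive (fun y => k * f y) x (k * df).
Proof.
  intros H. replace (k * df) with (0 * f x + k * df) by ring.
  apply (is_derive_Rmult (fun _ => k) f); auto. apply is_derive_Rconst.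
Qed.

Lemma is_derive_Rext (f g : R -> R) x l :
  (forall y, f y = g y) -> is_derive f x l -> is_derive g x l.
Proof. intros E H. apply (is_derive_ext f g); auto. Qed.

Lemma is_derive_Rext_inI a b (f g : R -> R) x l : inI a b x ->
  (forall y, inI a b y -> f y = g y) -> is_derive f x l -> is_derive g x l.
Proof.
  intros Hx E H. apply (is_derive_ext_loc f g); auto.
  generalize (inI_locally a b x Hx). apply filter_imp. auto.
Qed.

Lemma RInt_Rscal (f : R -> R) k t s :
  ex_RInt f t s -> RInt (fun y => k * f y) t s = k * RInt f t s.
Proof. intros H. exact (RInt_scal f t s k H). Qed.

Lemma RInt_Rminus (f g : R -> R) t s : ex_RInt f t s -> ex_RInt g t s ->
  RInt (fun y => f y - g y) t s = RInt f t s - RInt g t s.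
Proof. intros H1 H2. exact (RInt_minus f g t s H1 H2). Qed.

Lemma RInt_Rplus (f g : R -> R) t s : ex_RInt f t s -> ex_RInt g t s ->
  RInt (fun y => f y + g y) t s = RInt f t s + RInt g t s.
Proof. intros H1 H2. exact (RInt_plus f g t s H1 H2). Qed.

Lemma continuous_Rabs_lt (f : R -> R) x eps : continuous f x -> 0 < eps ->
  exists d, 0 < d /\ forall y, Rabs (y - x) < d -> Rabs (f y - f x) < eps.
Proof.
  intros Hc He.
  assert (H : locally x (fun y => Rabs (f y - f x) < eps)).
  { apply (Hc (fun u => Rabs (u - f x) < eps)). exists (mkposreal eps He). intros u Hu. exact Hu. }
  destruct H as [d Hd]. exists d. split; [apply cond_pos|]. intros y Hy. apply Hd. exact Hy.
Qed.

Lemma ex_series_Rle (u M : nat -> R) :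
  (forall n, Rabs (u n) <= M n) -> ex_series M -> ex_series u.
Proof.
  intros H HM. apply ex_series_Rabs.
  apply (@ex_series_le R_AbsRing R_CompleteNormedModule (fun n => Rabs (u n)) M); auto.
  intros n. unfold norm; simpl. rewrite Rabs_Rabsolu. auto.
Qed.

Lemma Series_Rabs_le (u M : nat -> R) :
  (forall n, Rabs (u n) <= M n) -> ex_series M -> Rabs (Series u) <= Series M.
Proof.
  intros H HM. assert (E : ex_series (fun n => Rabs (u n))).
  { apply (@ex_series_le R_AbsRing R_CompleteNormedModule (fun n => Rabs (u n)) M); auto.
    intros n. unfold norm; simpl. rewrite Rabs_Rabsolu. auto. }
  eapply Rle_trans; [apply Series_Rabs; auto|]. apply Series_le; auto.
  intros n; split; auto. apply Rabs_pos.
Qed.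

Lemma ex_series_Rext (u v : nat -> R) : (forall n, u n = v n) -> ex_series u -> ex_series v.
Proof. apply (@ex_series_ext R_AbsRing R_NormedModule). Qed.

Lemma ex_series_Rscal (u : nat -> R) k : ex_series u -> ex_series (fun n => k * u n).
Proof. intros H. apply (@ex_series_scal_l R_AbsRing R_NormedModule k u H). Qed.

Lemma ex_series_Rplus (u v : nat -> R) :
  ex_series u -> ex_series v -> ex_series (fun n => u n + v n).
Proof. intros H1 H2. apply (@ex_series_plus R_AbsRing R_NormedModule u v H1 H2). Qed.

Lemma ex_series_Rminus (u v : nat -> R) :
  ex_series u -> ex_series v -> ex_series (fun n => u n - v n).
Proof.
  intros H1 H2. apply (ex_series_Rext (fun n => u n + (-1) * v n)); [intros; ring|].
  apply ex_series_Rplus; auto. apply ex_series_Rscal; auto.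
Qed.

Section IntervalIntegrals.
Variables a b : option R.

Lemma ex_RInt_inI (f : R -> R) t s : (forall x, inI a b x -> continuous f x) ->
  inI a b t -> inI a b s -> ex_RInt f t s.
Proof.
  intros Hc Ht Hs. apply (@ex_RInt_continuous R_CompleteNormedModule). intros z Hz. apply Hc.
  eapply inI_between_min_max; [exact Ht|exact Hs|exact Hz].
Qed.

Lemma is_derive_RInt_inI (f : R -> R) t x : (forall x, inI a b x -> continuous f x) ->
  inI a b t -> inI a b x -> is_derive (fun s => RInt f t s) x (f x).
Proof.
  intros Hc Ht Hx. apply is_derive_RInt with (a := t); auto.
  generalize (inI_locally _ _ _ Hx). apply filter_imp. intros y Hy.
  apply (@RInt_correct R_CompleteNormedModule). apply ex_RInt_inI; auto.
Qed.

Lemma is_derive_RInt_inI' (f : R -> R) t x : (forall x, inI a b x -> continuous f x) ->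
  inI a b t -> inI a b x -> is_derive (fun s => RInt f s t) x (- f x).
Proof.
  intros Hc Ht Hx. apply (is_derive_RInt' f (fun s => RInt f s t) x t); auto.
  generalize (inI_locally _ _ _ Hx). apply filter_imp. intros y Hy.
  apply (@RInt_correct R_CompleteNormedModule). apply ex_RInt_inI; auto.
Qed.

Lemma RInt_inI_derive (G g : R -> R) t x :
  (forall y, inI a b y -> is_derive G y (g y)) ->
  (forall y, inI a b y -> continuous g y) ->
  inI a b t -> inI a b x -> RInt g t x = G x - G t.
Proof.
  intros HD Hc Ht Hx. apply is_RInt_unique. apply (is_RInt_derive G g t x).
  - intros z Hz. apply HD. exact (inI_between_min_max a b t x z Ht Hx Hz).
  - intros z Hz. apply Hc. exact (inI_between_min_max a b t x z Ht Hx Hz).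
Qed.

Lemma RInt_le_inI (f g : R -> R) t x :
  (forall x, inI a b x -> continuous f x) -> (forall x, inI a b x -> continuous g x) ->
  inI a b t -> inI a b x -> t <= x ->
  (forall y, inI a b y -> t <= y <= x -> f y <= g y) -> RInt f t x <= RInt g t x.
Proof.
  intros Hf Hg Ht Hx Htx H. apply RInt_le; auto; try apply ex_RInt_inI; auto.
  intros y Hy. apply H; [apply (inI_between a b t x y Ht Hx)|]; lra.
Qed.

Lemma RInt_ge_0_inI (f : R -> R) t x : (forall x, inI a b x -> continuous f x) ->
  inI a b t -> inI a b x -> t <= x ->
  (forall y, inI a b y -> t <= y <= x -> 0 <= f y) -> 0 <= RInt f t x.
Proof.
  intros Hf Ht Hx Htx H. apply RInt_ge_0; auto; [apply ex_RInt_inI; auto|].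
  intros y Hy. apply H; [apply (inI_between a b t x y Ht Hx)|]; lra.
Qed.

Lemma RInt_Chasles_inI (f : R -> R) t s x : (forall x, inI a b x -> continuous f x) ->
  inI a b t -> inI a b s -> inI a b x -> RInt f t x = RInt f t s + RInt f s x.
Proof.
  intros Hf Ht Hs Hx. symmetry. apply (RInt_Chasles f t s x); apply ex_RInt_inI; auto.
Qed.

Lemma abs_RInt_le_inI (f : R -> R) t s : (forall x, inI a b x -> continuous f x) ->
  inI a b t -> inI a b s -> t <= s -> Rabs (RInt f t s) <= RInt (fun y => Rabs (f y)) t s.
Proof. intros Hf Ht Hs Hts. apply abs_RInt_le; auto. apply ex_RInt_inI; auto. Qed.

(** * Improper integrals at the left end *)

Lemma Lub_Rbar_finite (E : R -> Prop) y0 B : E y0 -> (forall y, E y -> y <= B) ->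
  exists l, real (Lub_Rbar E) = l /\ (forall y, E y -> y <= l) /\ l <= B /\
    (forall eps, 0 < eps -> exists y, E y /\ l - eps < y).
Proof.
  intros H0 HB. destruct (Lub_Rbar_correct E) as [Hub Hlub].
  assert (Hb : is_ub_Rbar E B) by (intros y Hy; simpl; apply HB; auto).
  destruct (Lub_Rbar E) as [l| |].
  - exists l. split; [reflexivity|]. split; [intros y Hy; exact (Hub y Hy)|].
    split; [exact (Hlub B Hb)|].
    intros eps Heps. apply NNPP. intros Hn.
    assert (Hb' : is_ub_Rbar E (l - eps)).
    { intros y Hy. simpl. apply Rnot_lt_le. intros Hlt. apply Hn. exists y. auto. }
    specialize (Hlub _ Hb'). simpl in Hlub. lra.
  - exfalso. exact (Hlub _ Hb).
  - exfalso. exact (Hub y0 H0).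
Qed.

(* [Ileft f x] is [∫_a^x f] as the supremum of the [∫_t^x f], [t] in the
   interval; it is meaningful for [f] nonnegative with bounded partial integrals. *)
Definition Ileft (f : R -> R) x : R :=
  real (Lub_Rbar (fun y => exists t, inI a b t /\ t <= x /\ y = RInt f t x)).

Definition left_bounded (f : R -> R) x :=
  exists B, forall t, inI a b t -> t <= x -> RInt f t x <= B.

Definition left_integrable (f : R -> R) :=
  (forall x, inI a b x -> continuous f x) /\
  (forall x, inI a b x -> 0 <= f x) /\ (forall x, inI a b x -> left_bounded f x).

Lemma Ileft_spec f x : inI a b x -> left_bounded f x ->
  (forall t, inI a b t -> t <= x -> RInt f t x <= Ileft f x) /\
  (forall B, (forall t, inI a b t -> t <= x -> RInt f t x <= B) -> Ileft f x <= B) /\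
  (forall eps, 0 < eps -> exists t, inI a b t /\ t <= x /\ Ileft f x - eps < RInt f t x).
Proof.
  intros Hx [B HB].
  set (E := fun y => exists t, inI a b t /\ t <= x /\ y = RInt f t x).
  assert (H0 : E (RInt f x x)) by (exists x; split; [auto|split; [lra|auto]]).
  assert (HB' : forall y, E y -> y <= B) by (intros y [t [Ht [Htx ->]]]; auto).
  destruct (Lub_Rbar_finite _ _ _ H0 HB') as [l [El [Hl1 [_ Hl3]]]].
  assert (EI : Ileft f x = l) by exact El. rewrite EI. split; [|split].
  - intros t Ht Htx. apply Hl1. exists t; auto.
  - intros B' HB2. destruct (Lub_Rbar_finite E _ B' H0) as [l' [El' [_ [Hl' _]]]].
    { intros y [t [Ht [Htx ->]]]; auto. }
    assert (l' = l) by (rewrite <- El', <- El; reflexivity). subst. exact Hl'.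
  - intros eps Heps. destruct (Hl3 eps Heps) as [y [[t [Ht [Htx ->]]] Hy]]. exists t; auto.
Qed.

Lemma Ileft_le f x B : inI a b x ->
  (forall t, inI a b t -> t <= x -> RInt f t x <= B) -> Ileft f x <= B.
Proof. intros Hx HB. apply (Ileft_spec f x Hx); [exists B|]; auto. Qed.

Lemma Ileft_ge f x t : inI a b x -> left_bounded f x -> inI a b t -> t <= x ->
  RInt f t x <= Ileft f x.
Proof. intros Hx HB. apply (Ileft_spec f x Hx HB). Qed.

Lemma Ileft_approx f x : inI a b x -> left_bounded f x -> forall eps, 0 < eps ->
  exists t, inI a b t /\ t <= x /\ Ileft f x - eps < RInt f t x.
Proof. intros Hx HB. apply (Ileft_spec f x Hx HB). Qed.

Lemma Ileft_ge_0 f x : left_integrable f -> inI a b x -> 0 <= Ileft f x.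
Proof.
  intros [Hc [Hn HB]] Hx. replace 0 with (RInt f x x) by (rewrite RInt_point; reflexivity).
  apply Ileft_ge; auto. lra.
Qed.

Lemma left_integrable_of_bounded f x0 : (forall x, inI a b x -> continuous f x) ->
  (forall x, inI a b x -> 0 <= f x) -> inI a b x0 -> left_bounded f x0 -> left_integrable f.
Proof.
  intros Hc Hn Hx0 [B HB]. split; [auto|split; [auto|]]. intros x Hx.
  exists (Rabs B + Rabs (RInt f x0 x)). intros t Ht Htx.
  pose proof (Rle_abs B). pose proof (Rabs_pos B). pose proof (Rle_abs (RInt f x0 x)).
  destruct (Rle_dec t x0) as [Htx0|Htx0].
  - rewrite (RInt_Chasles_inI f t x0 x) by auto. specialize (HB t Ht Htx0). lra.
  - rewrite (RInt_Chasles_inI f x0 t x) in * by auto.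
    assert (0 <= RInt f x0 t) by (apply RInt_ge_0_inI; auto; try lra; intros; apply Hn; auto).
    lra.
Qed.

Lemma Ileft_Chasles f x y : left_integrable f -> inI a b x -> inI a b y ->
  Ileft f x = Ileft f y + RInt f y x.
Proof.
  assert (Hle : forall x y, left_integrable f -> inI a b x -> inI a b y -> y <= x ->
            Ileft f x = Ileft f y + RInt f y x).
  { intros x' y' Hg Hx Hy Hyx. pose proof Hg as [Hc [Hn HB]].
    pose proof (Ileft_ge_0 f y' Hg Hy).
    apply Rle_antisym.
    - apply Ileft_le; auto. intros t Ht Htx. destruct (Rle_dec t y') as [Hty|Hty].
      + rewrite (RInt_Chasles_inI f t y' x') by auto.
        pose proof (Ileft_ge f y' t Hy (HB y' Hy) Ht Hty). lra.
      + rewrite (RInt_Chasles_inI f y' t x') in * by auto.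
        assert (0 <= RInt f y' t) by (apply RInt_ge_0_inI; auto; try lra; intros; apply Hn; auto).
        lra.
    - apply Rnot_lt_le. intros Hlt.
      destruct (Ileft_approx f y' Hy (HB y' Hy) (Ileft f y' + RInt f y' x' - Ileft f x'))
        as [t [Ht [Hty Ha]]]; [lra|].
      pose proof (Ileft_ge f x' t Hx (HB x' Hx) Ht ltac:(lra)) as Hge.
      rewrite (RInt_Chasles_inI f t y' x') in Hge by auto. lra. }
  intros Hg Hx Hy. destruct (Rle_dec y x); [apply Hle; auto|].
  rewrite (Hle y x) by (auto; lra).
  rewrite <- (opp_RInt_swap f); [unfold opp; simpl; ring|].
  apply ex_RInt_inI; auto. apply Hg.
Qed.

Lemma Ileft_derive f x : left_integrable f -> inI a b x -> is_derive (Ileft f) x (f x).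
Proof.
  intros Hg Hx. destruct (inI_exists_lt a b x Hx) as [y [Hy _]].
  apply (is_derive_ext_loc (fun z => Ileft f y + RInt f y z)).
  - generalize (inI_locally a b x Hx). apply filter_imp. intros z Hz.
    symmetry. apply Ileft_Chasles; auto.
  - replace (f x) with (0 + f x) by ring.
    apply (@is_derive_plus R_AbsRing R_NormedModule).
    + apply (@is_derive_const R_AbsRing R_NormedModule).
    + apply is_derive_RInt_inI; auto. apply Hg.
Qed.

Lemma Ileft_vanishes f x0 : left_integrable f -> inI a b x0 -> forall eps, 0 < eps ->
  exists t, inI a b t /\ forall x, inI a b x -> x < t -> Ileft f x < eps.
Proof.
  intros Hg Hx0 eps Heps. pose proof Hg as [Hc [Hn HB]].
  destruct (Ileft_approx f x0 Hx0 (HB x0 Hx0) eps Heps) as [t0 [Ht0 [Ht0x Ha]]].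
  exists t0. split; auto. intros x Hx Hxt.
  rewrite (Ileft_Chasles f x0 x Hg Hx0 Hx) in Ha.
  rewrite (RInt_Chasles_inI f x t0 x0) in Ha by auto.
  assert (0 <= RInt f x t0) by (apply RInt_ge_0_inI; auto; try lra; intros; apply Hn; auto).
  lra.
Qed.

Lemma le_of_vanishing_error (A B : R) (g : R -> R) s : inI a b s ->
  (forall t, inI a b t -> t <= s -> A <= B + g t) ->
  (forall eps, 0 < eps -> exists t0, inI a b t0 /\ forall t, inI a b t -> t < t0 -> g t < eps) ->
  A <= B.
Proof.
  intros Hs H Hg. apply Rnot_lt_le. intros Hlt.
  destruct (Hg (A - B)) as [t0 [Ht0 H0]]; [lra|].
  destruct (inI_exists_lt a b _ (inI_min a b t0 s Ht0 Hs)) as [t [Ht Htm]].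
  pose proof (Rmin_l t0 s). pose proof (Rmin_r t0 s).
  specialize (H t Ht ltac:(lra)). specialize (H0 t Ht ltac:(lra)). lra.
Qed.

Lemma Rabs_le_RInt_Rabs_derive (F f : R -> R) t s :
  (forall y, inI a b y -> is_derive F y (f y)) -> (forall y, inI a b y -> continuous f y) ->
  inI a b t -> inI a b s -> t <= s -> Rabs (F s) <= Rabs (F t) + RInt (fun y => Rabs (f y)) t s.
Proof.
  intros HD Hc Ht Hs Hts.
  pose proof (RInt_inI_derive F f t s HD Hc Ht Hs) as E.
  pose proof (abs_RInt_le_inI f t s Hc Ht Hs Hts) as A. rewrite E in A.
  pose proof (Rabs_triang (F s - F t) (F t)) as T.
  replace (F s - F t + F t) with (F s) in T by ring.
  lra.
Qed.

Lemma bounded_left_of_vanishing (g : R -> R) x0 : inI a b x0 ->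
  (forall x, inI a b x -> continuous g x) ->
  (forall eps, 0 < eps -> exists t0, inI a b t0 /\ forall t, inI a b t -> t < t0 -> g t < eps) ->
  exists B, 0 <= B /\ forall s, inI a b s -> s <= x0 -> g s <= B.
Proof.
  intros Hx0 Hc Hg. destruct (Hg 1) as [t0 [Ht0 H0]]; [lra|].
  destruct (inI_exists_lt a b _ (inI_min a b t0 x0 Ht0 Hx0)) as [t' [Ht' Htm]].
  pose proof (Rmin_l t0 x0). pose proof (Rmin_r t0 x0).
  assert (Hcont : forall z, t' <= z <= x0 -> continuity_pt g z).
  { intros z Hz. apply continuity_pt_filterlim. apply Hc. apply (inI_between a b t' x0); auto. }
  destruct (continuity_ab_maj g t' x0 ltac:(lra) Hcont) as [m [Hm _]].
  exists (Rmax 1 (g m)). split; [pose proof (Rmax_l 1 (g m)); lra|].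
  intros s Hs Hsx. pose proof (Rmax_l 1 (g m)). pose proof (Rmax_r 1 (g m)).
  destruct (Rlt_le_dec s t').
  - specialize (H0 s Hs ltac:(lra)). lra.
  - specialize (Hm s ltac:(lra)). lra.
Qed.

End IntervalIntegrals.

Lemma is_series_exp y : is_series (fun n => y ^ n / INR (fact n)) (exp y).
Proof.
  generalize (is_exp_Reals y). unfold is_pseries. apply is_series_ext.
  intros n. rewrite pow_n_pow. reflexivity.
Qed.

Lemma ex_series_exp y : ex_series (fun n => y ^ n / INR (fact n)).
Proof. exists (exp y). apply is_series_exp. Qed.

Lemma Series_exp y : Series (fun n => y ^ n / INR (fact n)) = exp y.
Proof. apply is_series_unique. apply is_series_exp. Qed.

Lemma exp_le_exp_compat x y : x <= y -> exp x <= exp y.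
Proof. intros [H|H]; [left; apply exp_increasing; exact H|right; rewrite H; reflexivity]. Qed.

Lemma Series_tail_Rabs_le (u M : nat -> R) N :
  (forall n, Rabs (u n) <= M n) -> ex_series M ->
  Rabs (Series u - sum_f_R0 u N) <= Series M - sum_f_R0 M N.
Proof.
  intros H HM. pose proof (ex_series_Rle u M H HM) as Hu.
  rewrite (Series_incr_n u (S N)), (Series_incr_n M (S N)) by (auto; lia). simpl pred.
  replace (sum_f_R0 u N + Series (fun k => u (S N + k)%nat) - sum_f_R0 u N)
    with (Series (fun k => u (S N + k)%nat)) by ring.
  replace (sum_f_R0 M N + Series (fun k => M (S N + k)%nat) - sum_f_R0 M N)
    with (Series (fun k => M (S N + k)%nat)) by ring.
  apply Series_Rabs_le; [auto|]. apply (@ex_series_incr_n R_AbsRing R_NormedModule M (S N)). auto.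
Qed.

Lemma CVU_dominated_Series (g : nat -> R -> R) (M : nat -> R) x (d : posreal) :
  (forall n y, Boule x d y -> Rabs (g n y) <= M n) -> ex_series M ->
  CVU (fun N y => sum_f_R0 (fun n => g n y) N) (fun y => Series (fun n => g n y)) x d.
Proof.
  intros HB HM eps Heps.
  pose proof (Series_correct _ HM) as H. apply is_series_Reals in H.
  destruct (H eps Heps) as [N HN]. exists N. intros n y Hn Hy.
  apply Rle_lt_trans with (Series M - sum_f_R0 M n).
  - apply Series_tail_Rabs_le; [intros k; apply HB; exact Hy | exact HM].
  - specialize (HN n Hn). unfold Rdist in HN. apply Rabs_def2 in HN. lra.
Qed.

Lemma derivable_pt_lim_Series (f g : nat -> R -> R) (x d : R) (M : nat -> R) : 0 < d ->
  (forall n y, Rabs (y - x) < d -> derivable_pt_lim (f n) y (g n y)) ->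
  (forall n y, Rabs (y - x) < d -> continuous (g n) y) ->
  (forall n y, Rabs (y - x) < d -> Rabs (g n y) <= M n) -> ex_series M ->
  (forall y, Rabs (y - x) < d -> ex_series (fun n => f n y)) ->
  derivable_pt_lim (fun y => Series (fun n => f n y)) x (Series (fun n => g n x)).
Proof.
  intros Hd HD HC HB HM Hf. set (dd := mkposreal d Hd).
  assert (HU := CVU_dominated_Series g M x dd HB HM).
  apply (derivable_pt_lim_CVU (fun N y => sum_f_R0 (fun n => f n y) N)
           (fun N y => sum_f_R0 (fun n => g n y) N) _ (fun y => Series (fun n => g n y)) x x dd).
  - unfold Boule; simpl. rewrite Rminus_diag, Rabs_R0. auto.
  - intros y N Hy. induction N; simpl; [apply HD; exact Hy|].
    apply (derivable_pt_lim_plus (fun z => sum_f_R0 (fun n => f n z) N) (fun z => f (S N) z)); auto.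
  - intros y Hy. apply is_series_Reals. apply Series_correct. apply Hf. exact Hy.
  - exact HU.
  - intros y Hy. apply (CVU_continuity _ _ x dd HU); [|exact Hy].
    intros N z Hz. induction N; simpl.
    + apply continuity_pt_filterlim. apply HC. exact Hz.
    + apply (continuity_pt_plus (fun z => sum_f_R0 (fun n => g n z) N) (fun z => g (S N) z)); auto.
      apply continuity_pt_filterlim. apply HC. exact Hz.
Qed.

(** * Complex power series with real coefficients *)

Fixpoint Cpow (z : Cplx) (n : nat) : Cplx :=
  match n with O => Defs.C1 | S m => Cmul z (Cpow z m) end.

Definition Cscal (k : R) (w : Cplx) : Cplx := (k * fst w, k * snd w).

(* The l1 norm, which is submultiplicative and within a factor 2 of [Cnorm]. *)
Definition Cnorm1 (z : Cplx) : R := Rabs (fst z) + Rabs (snd z).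

Definition Cseries (cf : nat -> R) (z : Cplx) : Cplx :=
  (Series (fun n => cf n * fst (Cpow z n)), Series (fun n => cf n * snd (Cpow z n))).

Lemma Cnorm1_ge_0 z : 0 <= Cnorm1 z.
Proof. unfold Cnorm1. pose proof (Rabs_pos (fst z)). pose proof (Rabs_pos (snd z)). lra. Qed.

Lemma Cnorm1_mul z w : Cnorm1 (Cmul z w) <= Cnorm1 z * Cnorm1 w.
Proof.
  destruct z as [x y], w as [u v]. unfold Cnorm1, Cmul; simpl.
  pose proof (Rabs_triang (x*u) (- (y*v))). pose proof (Rabs_triang (x*v) (y*u)).
  rewrite Rabs_Ropp in *. rewrite !Rabs_mult in *. unfold Rminus.
  pose proof (Rabs_pos x). pose proof (Rabs_pos y).
  pose proof (Rabs_pos u). pose proof (Rabs_pos v).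
  nra.
Qed.

Lemma Cnorm1_add z w : Cnorm1 (Cadd z w) <= Cnorm1 z + Cnorm1 w.
Proof.
  destruct z as [x y], w as [u v]. unfold Cnorm1, Cadd; simpl.
  pose proof (Rabs_triang x u). pose proof (Rabs_triang y v). lra.
Qed.

Lemma Cnorm1_scal k w : Cnorm1 (Cscal k w) = Rabs k * Cnorm1 w.
Proof. unfold Cnorm1, Cscal; simpl. rewrite !Rabs_mult. ring. Qed.

Lemma Cnorm1_Cpow z n : Cnorm1 (Cpow z n) <= Cnorm1 z ^ n.
Proof.
  induction n as [|n IH].
  - unfold Cnorm1; simpl. rewrite Rabs_R1, Rabs_R0. lra.
  - simpl. eapply Rle_trans; [apply Cnorm1_mul|].
    apply Rmult_le_compat_l; [apply Cnorm1_ge_0|exact IH].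
Qed.

Lemma Rabs_fst_le_Cnorm1 w : Rabs (fst w) <= Cnorm1 w.
Proof. unfold Cnorm1. pose proof (Rabs_pos (snd w)). lra. Qed.

Lemma Rabs_snd_le_Cnorm1 w : Rabs (snd w) <= Cnorm1 w.
Proof. unfold Cnorm1. pose proof (Rabs_pos (fst w)). lra. Qed.

Lemma Cnorm_le_Cnorm1 z : Cnorm z <= Cnorm1 z.
Proof.
  destruct z as [x y]. unfold Cnorm, Cnorm1; simpl.
  pose proof (Rabs_pos x); pose proof (Rabs_pos y).
  rewrite <- (sqrt_square (Rabs x + Rabs y)) by lra. apply sqrt_le_1_alt.
  assert (Rabs x * Rabs x = x * x) by (rewrite <- Rabs_mult; apply Rabs_right; nra).
  assert (Rabs y * Rabs y = y * y) by (rewrite <- Rabs_mult; apply Rabs_right; nra).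
  nra.
Qed.

Lemma Cnorm1_le_Cnorm z : Cnorm1 z <= 2 * Cnorm z.
Proof.
  destruct z as [x y]. unfold Cnorm, Cnorm1; simpl.
  assert (Rabs x * Rabs x = x * x) by (rewrite <- Rabs_mult; apply Rabs_right; nra).
  assert (Rabs y * Rabs y = y * y) by (rewrite <- Rabs_mult; apply Rabs_right; nra).
  pose proof (Rabs_pos x); pose proof (Rabs_pos y).
  assert (sqrt (x*x+y*y) * sqrt (x*x+y*y) = x*x+y*y) by (apply sqrt_sqrt; nra).
  pose proof (sqrt_pos (x*x+y*y)). pose proof (Rle_0_sqr (Rabs x - Rabs y)). unfold Rsqr in *.
  nra.
Qed.

Lemma pow2_INR_le n : INR n ^ 2 <= 2 * 2 ^ n.
Proof.
  assert (Hlin : forall n, 2 * INR n + 1 <= 2 * 2 ^ n).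
  { induction n0; [simpl; lra|]. rewrite S_INR. simpl.
    assert (1 <= 2 ^ n0) by (apply pow_R1_Rle; lra). lra. }
  induction n; [simpl; lra|]. rewrite S_INR. specialize (Hlin n). simpl in *. nra.
Qed.

Definition Cpow_remainder z h n :=
  Csub (Csub (Cpow (Cadd z h) n) (Cpow z n)) (Cscal (INR n) (Cmul (Cpow z (pred n)) h)).

Lemma Cpow_remainder_S z h n : Cpow_remainder z h (S n) =
  Cadd (Cmul (Cadd z h) (Cpow_remainder z h n)) (Cscal (INR n) (Cmul (Cpow z (pred n)) (Cmul h h))).
Proof.
  destruct n.
  - unfold Cpow_remainder; simpl. destruct z, h; unfold Cadd, Csub, Cmul, Cscal, Defs.C1; simpl.
    f_equal; ring.
  - unfold Cpow_remainder. cbn [Cpow pred]. rewrite !S_INR.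
    destruct (Cpow (Cadd z h) n), (Cpow z n), z, h.
    unfold Cadd, Csub, Cmul, Cscal; cbn [fst snd]. f_equal; ring.
Qed.

Lemma Cnorm1_Cpow_remainder z h n : Cnorm1 h <= 1 ->
  Cnorm1 (Cpow_remainder z h n) <= INR n ^ 2 * (Cnorm1 z + 1) ^ n * Cnorm1 h ^ 2.
Proof.
  intros Hh. pose proof (Cnorm1_ge_0 h) as Hh0. pose proof (Cnorm1_ge_0 z) as Hz0.
  set (rho := Cnorm1 z + 1). assert (Hr : 1 <= rho) by (unfold rho; lra).
  induction n as [|n IH].
  - assert (E : Cpow_remainder z h 0 = (0, 0)).
    { unfold Cpow_remainder; simpl. destruct z, h; unfold Cadd, Csub, Cmul, Cscal, Defs.C1; simpl.
      f_equal; ring. }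
    rewrite E. unfold Cnorm1; simpl. rewrite Rabs_R0. nra.
  - rewrite Cpow_remainder_S. eapply Rle_trans; [apply Cnorm1_add|]. rewrite Cnorm1_scal.
    assert (T1 : Cnorm1 (Cmul (Cadd z h) (Cpow_remainder z h n))
                 <= rho * (INR n ^ 2 * rho ^ n * Cnorm1 h ^ 2)).
    { eapply Rle_trans; [apply Cnorm1_mul|]. apply Rmult_le_compat; auto using Cnorm1_ge_0.
      pose proof (Cnorm1_add z h). unfold rho; lra. }
    assert (T2 : Rabs (INR n) * Cnorm1 (Cmul (Cpow z (pred n)) (Cmul h h))
                 <= INR n * (rho ^ S n * Cnorm1 h ^ 2)).
    { rewrite Rabs_right by (apply Rle_ge, pos_INR). apply Rmult_le_compat_l; [apply pos_INR|].
      eapply Rle_trans; [apply Cnorm1_mul|]. apply Rmult_le_compat; auto using Cnorm1_ge_0.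
      - eapply Rle_trans; [apply Cnorm1_Cpow|]. apply Rle_trans with (rho ^ pred n).
        + apply pow_incr. split; [apply Cnorm1_ge_0|unfold rho; lra].
        + apply Rle_pow; auto. lia.
      - eapply Rle_trans; [apply Cnorm1_mul|]. right; ring. }
    assert (0 <= rho ^ n) by (apply pow_le; lra).
    assert (0 <= Cnorm1 h ^ 2) by (apply pow_le; lra).
    pose proof (pos_INR n). rewrite S_INR. simpl pow in *.
    assert (0 <= rho * rho ^ n * (Cnorm1 h * (Cnorm1 h * 1))) by
      (apply Rmult_le_pos; [apply Rmult_le_pos|]; nra).
    nra.
Qed.

(* Regrouping used to write the Taylor remainder of a power series termwise. *)
Lemma Series_sub_sub_linear (A B c1 c2 E : nat -> R) x y :
  ex_series A -> ex_series B -> ex_series c1 -> ex_series c2 ->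
  (forall n, E (S n) = c1 n * x + c2 n * y) -> E 0%nat = 0 ->
  Series A - Series B - (Series c1 * x + Series c2 * y) = Series (fun n => A n - B n - E n).
Proof.
  intros HA HB H1 H2 HE HE0.
  assert (Hc1x : ex_series (fun n => c1 n * x)).
  { apply (ex_series_Rext (fun n => x * c1 n)); [intros; ring | apply ex_series_Rscal; auto]. }
  assert (Hc2y : ex_series (fun n => c2 n * y)).
  { apply (ex_series_Rext (fun n => y * c2 n)); [intros; ring | apply ex_series_Rscal; auto]. }
  assert (HS : ex_series (fun n => E (S n))).
  { apply (ex_series_Rext (fun n => c1 n * x + c2 n * y)); [intros; symmetry; auto|].
    apply ex_series_Rplus; auto. }
  assert (HEx : ex_series E) by (apply (@ex_series_incr_1 R_AbsRing R_NormedModule E); auto).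
  assert (Eq1 : Series c1 * x + Series c2 * y = Series E).
  { rewrite (Series_incr_1 E HEx), HE0. rewrite <- !Series_scal_r.
    rewrite <- Series_plus by auto. rewrite Rplus_0_l. apply Series_ext. intros; symmetry; auto. }
  rewrite Eq1. rewrite <- Series_minus by auto. rewrite <- Series_minus; [reflexivity| |auto].
  apply ex_series_Rminus; auto.
Qed.

Section ExpBoundedCoefficients.
Variables (cf : nat -> R) (K : R).
Hypothesis HK : 0 <= K.
Hypothesis Hcf : forall n, Rabs (cf n) <= K ^ n / INR (fact n).

Lemma Cseries_term_bound w n :
  Rabs (cf n * fst (Cpow w n)) <= (K * Cnorm1 w) ^ n / INR (fact n) /\
  Rabs (cf n * snd (Cpow w n)) <= (K * Cnorm1 w) ^ n / INR (fact n).
Proof.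
  rewrite Rpow_mult_distr, !Rabs_mult.
  pose proof (Cnorm1_Cpow w n). pose proof (Rabs_fst_le_Cnorm1 (Cpow w n)).
  pose proof (Rabs_snd_le_Cnorm1 (Cpow w n)). pose proof (Rabs_pos (cf n)).
  pose proof (Rabs_pos (fst (Cpow w n))). pose proof (Rabs_pos (snd (Cpow w n))).
  replace (K ^ n * Cnorm1 w ^ n / INR (fact n)) with (K ^ n / INR (fact n) * Cnorm1 w ^ n)
    by (unfold Rdiv; ring).
  split; apply Rmult_le_compat; auto; lra.
Qed.

Lemma ex_series_Cseries w :
  ex_series (fun n => cf n * fst (Cpow w n)) /\ ex_series (fun n => cf n * snd (Cpow w n)).
Proof.
  split; apply (ex_series_Rle _ (fun n => (K * Cnorm1 w) ^ n / INR (fact n)));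
    try apply ex_series_exp; intros n; apply Cseries_term_bound.
Qed.

Lemma Cseries_exponential_type : exponential_type (Cseries cf).
Proof.
  exists 2, (2 * K). intros z.
  eapply Rle_trans; [apply Cnorm_le_Cnorm1|]. unfold Cnorm1, Cseries; simpl.
  assert (H1 : Rabs (Series (fun n => cf n * fst (Cpow z n))) <= exp (K * Cnorm1 z)).
  { rewrite <- Series_exp. apply Series_Rabs_le; [|apply ex_series_exp].
    intros n; apply Cseries_term_bound. }
  assert (H2 : Rabs (Series (fun n => cf n * snd (Cpow z n))) <= exp (K * Cnorm1 z)).
  { rewrite <- Series_exp. apply Series_Rabs_le; [|apply ex_series_exp].
    intros n; apply Cseries_term_bound. }
  assert (exp (K * Cnorm1 z) <= exp (2 * K * Cnorm z)).
  { apply exp_le_exp_compat. pose proof (Cnorm1_le_Cnorm z).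
    replace (2 * K * Cnorm z) with (K * (2 * Cnorm z)) by ring. apply Rmult_le_compat_l; auto. }
  lra.
Qed.

Definition deriv_coef n := INR (S n) * cf (S n).

Lemma deriv_coef_term_bound n w :
  Rabs (deriv_coef n * fst (Cpow w n)) <= K * ((K * Cnorm1 w) ^ n / INR (fact n)) /\
  Rabs (deriv_coef n * snd (Cpow w n)) <= K * ((K * Cnorm1 w) ^ n / INR (fact n)).
Proof.
  unfold deriv_coef. rewrite !Rabs_mult, (Rabs_right (INR (S n))) by (apply Rle_ge, pos_INR).
  assert (E : INR (S n) * (K ^ S n / INR (fact (S n))) = K * (K ^ n / INR (fact n))).
  { rewrite fact_simpl, mult_INR. change (K ^ S n) with (K * K ^ n). field.
    split; [apply INR_fact_neq_0|apply not_0_INR; lia]. }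
  assert (Hb : INR (S n) * Rabs (cf (S n)) <= K * (K ^ n / INR (fact n))).
  { rewrite <- E. apply Rmult_le_compat_l; [apply pos_INR|auto]. }
  pose proof (Cnorm1_Cpow w n). pose proof (Rabs_fst_le_Cnorm1 (Cpow w n)).
  pose proof (Rabs_snd_le_Cnorm1 (Cpow w n)).
  assert (0 <= INR (S n) * Rabs (cf (S n))) by (apply Rmult_le_pos; [apply pos_INR|apply Rabs_pos]).
  rewrite Rpow_mult_distr.
  replace (K * (K ^ n * Cnorm1 w ^ n / INR (fact n)))
    with (K * (K ^ n / INR (fact n)) * Cnorm1 w ^ n) by (unfold Rdiv; ring).
  split; apply Rmult_le_compat; auto using Rabs_pos; lra.
Qed.

Lemma ex_series_deriv_coef w : ex_series (fun n => deriv_coef n * fst (Cpow w n)) /\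
  ex_series (fun n => deriv_coef n * snd (Cpow w n)).
Proof.
  split; apply (ex_series_Rle _ (fun n => K * ((K * Cnorm1 w) ^ n / INR (fact n))));
    try (apply ex_series_Rscal; apply ex_series_exp); intros n; apply deriv_coef_term_bound.
Qed.

Lemma Cseries_remainder_term_bound z h n : Cnorm1 h <= 1 ->
  Rabs (cf n) * Cnorm1 (Cpow_remainder z h n)
  <= (2 * K * (Cnorm1 z + 1)) ^ n / INR (fact n) * (2 * Cnorm1 h ^ 2).
Proof.
  intros Hh. pose proof (Cnorm1_Cpow_remainder z h n Hh). pose proof (pow2_INR_le n).
  pose proof (Cnorm1_ge_0 z). pose proof (Cnorm1_ge_0 h).
  assert (0 <= (Cnorm1 z + 1) ^ n) by (apply pow_le; lra).
  assert (0 <= Cnorm1 h ^ 2) by (apply pow_le; lra).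
  assert (HKn : 0 <= K ^ n / INR (fact n)).
  { apply Rmult_le_pos; [apply pow_le; auto|left; apply Rinv_0_lt_compat, INR_fact_lt_0]. }
  apply Rle_trans with (K ^ n / INR (fact n) * (INR n ^ 2 * (Cnorm1 z + 1) ^ n * Cnorm1 h ^ 2)).
  { apply Rmult_le_compat; auto using Rabs_pos, Cnorm1_ge_0. }
  rewrite !Rpow_mult_distr. unfold Rdiv.
  replace (2 ^ n * K ^ n * (Cnorm1 z + 1) ^ n * / INR (fact n) * (2 * Cnorm1 h ^ 2)) with
    ((K ^ n * / INR (fact n)) * ((2 * 2 ^ n) * (Cnorm1 z + 1) ^ n * Cnorm1 h ^ 2)) by ring.
  apply Rmult_le_compat_l; [exact HKn|].
  apply Rmult_le_compat_r; auto. apply Rmult_le_compat_r; auto.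
Qed.

Lemma Cseries_remainder_bound z h : Cnorm1 h <= 1 ->
  Cnorm1 (Csub (Csub (Cseries cf (Cadd z h)) (Cseries cf z)) (Cmul (Cseries deriv_coef z) h))
  <= 4 * exp (2 * K * (Cnorm1 z + 1)) * Cnorm1 h ^ 2.
Proof.
  intros Hh. set (C' := 2 * exp (2 * K * (Cnorm1 z + 1))).
  assert (Hser : forall pi : Cplx -> R, (forall w, Rabs (pi w) <= Cnorm1 w) ->
     Rabs (Series (fun n => cf n * pi (Cpow_remainder z h n))) <= C' * Cnorm1 h ^ 2).
  { intros pi Hpi.
    replace (C' * Cnorm1 h ^ 2)
      with (Series (fun n => (2 * K * (Cnorm1 z + 1)) ^ n / INR (fact n) * (2 * Cnorm1 h ^ 2))).
    - apply Series_Rabs_le.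
      + intros n. rewrite Rabs_mult. eapply Rle_trans.
        * apply Rmult_le_compat_l; [apply Rabs_pos|apply Hpi].
        * apply Cseries_remainder_term_bound; auto.
      + apply (ex_series_Rext
          (fun n => (2 * Cnorm1 h ^ 2) * ((2 * K * (Cnorm1 z + 1)) ^ n / INR (fact n)))).
        * intros; ring.
        * apply ex_series_Rscal, ex_series_exp.
    - rewrite Series_scal_r, Series_exp. unfold C'. ring. }
  destruct (ex_series_Cseries (Cadd z h)) as [Ea1 Ea2].
  destruct (ex_series_Cseries z) as [Eb1 Eb2].
  destruct (ex_series_deriv_coef z) as [Ec1 Ec2].
  assert (F1 : fst
      (Csub (Csub (Cseries cf (Cadd z h)) (Cseries cf z)) (Cmul (Cseries deriv_coef z) h))
               = Series (fun n => cf n * fst (Cpow_remainder z h n))).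
  { unfold Cseries, Csub, Cmul; cbn [fst snd].
    replace (Series (fun n => deriv_coef n * fst (Cpow z n)) * fst h
             - Series (fun n => deriv_coef n * snd (Cpow z n)) * snd h)
      with (Series (fun n => deriv_coef n * fst (Cpow z n)) * fst h
            + Series (fun n => deriv_coef n * snd (Cpow z n)) * (- snd h)) by ring.
    rewrite (Series_sub_sub_linear _ _ _ _
               (fun n => INR n * cf n * fst (Cmul (Cpow z (pred n)) h))); auto.
    - apply Series_ext. intros n. unfold Cpow_remainder, Csub, Cscal; cbn [fst snd]. ring.
    - intros n. unfold deriv_coef, Cmul; cbn [fst snd pred]. ring.
    - simpl. ring. }
  assert (F2 : snd
      (Csub (Csub (Cseries cf (Cadd z h)) (Cseries cf z)) (Cmul (Cseries deriv_coef z) h))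
               = Series (fun n => cf n * snd (Cpow_remainder z h n))).
  { unfold Cseries, Csub, Cmul; cbn [fst snd].
    rewrite (Series_sub_sub_linear _ _ _ _
               (fun n => INR n * cf n * snd (Cmul (Cpow z (pred n)) h))); auto.
    - apply Series_ext. intros n. unfold Cpow_remainder, Csub, Cscal; cbn [fst snd]. ring.
    - intros n. unfold deriv_coef, Cmul; cbn [fst snd pred]. ring.
    - simpl. ring. }
  unfold Cnorm1 at 1. rewrite F1, F2.
  pose proof (Hser fst Rabs_fst_le_Cnorm1). pose proof (Hser snd Rabs_snd_le_Cnorm1).
  unfold C' in *. lra.
Qed.

Lemma Cseries_entire : entire (Cseries cf).
Proof.
  intros z. exists (Cseries deriv_coef z). intros eps Heps.
  set (C := 16 * exp (2 * K * (Cnorm1 z + 1))).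
  assert (HC : 0 < C) by (unfold C; pose proof (exp_pos (2 * K * (Cnorm1 z + 1))); lra).
  exists (Rmin (1/2) (eps / (C + 1))). split.
  { apply Rmin_glb_lt; [lra|]. apply Rdiv_lt_0_compat; lra. }
  intros h _ Hh.
  pose proof (Rmin_l (1/2) (eps / (C + 1))). pose proof (Rmin_r (1/2) (eps / (C + 1))).
  pose proof (Cnorm1_le_Cnorm h). pose proof (Cnorm1_ge_0 h).
  assert (Hcn : 0 <= Cnorm h) by (unfold Cnorm; apply sqrt_pos).
  pose proof (Cseries_remainder_bound z h ltac:(lra)) as Hrem.
  eapply Rle_trans; [apply Cnorm_le_Cnorm1|]. eapply Rle_trans; [apply Hrem|].
  assert (Cnorm1 h ^ 2 <= 4 * (Cnorm h * Cnorm h)) by (simpl; nra).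
  assert (HCh : C * Cnorm h <= eps).
  { apply Rle_trans with (C * (eps / (C + 1))); [apply Rmult_le_compat_l; lra|].
    unfold Rdiv. apply Rle_trans with (eps * (C * / (C + 1))); [right; ring|].
    assert (C * / (C + 1) <= 1).
    { apply (Rmult_le_reg_r (C + 1)); [lra|]. rewrite Rmult_assoc, Rinv_l by lra. lra. }
    nra. }
  apply Rle_trans with (C * Cnorm h * Cnorm h); [|apply Rmult_le_compat_r; auto].
  apply Rle_trans with (4 * exp (2 * K * (Cnorm1 z + 1)) * (4 * (Cnorm h * Cnorm h))).
  - apply Rmult_le_compat_l; auto. pose proof (exp_pos (2 * K * (Cnorm1 z + 1))). lra.
  - unfold C. right; ring.
Qed.

End ExpBoundedCoefficients.

Section Solutions.
Variables (a b : option R) (p r : R -> R) (lam : Cplx).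

Lemma solves_Csub w dw w' dw' :
  solves a b p r lam w dw -> solves a b p r lam w' dw' ->
  solves a b p r lam (fun x => Csub (w x) (w' x)) (fun x => Csub (dw x) (dw' x)).
Proof.
  intros H H' x Hx.
  destruct (H x Hx) as [A1 [A2 [A3 A4]]], (H' x Hx) as [B1 [B2 [B3 B4]]].
  unfold Csub, Cmul in *; cbn [fst snd] in *.
  split; [exact (derivable_pt_lim_minus _ _ x _ _ A1 B1)|].
  split; [exact (derivable_pt_lim_minus _ _ x _ _ A2 B2)|].
  split; apply is_derive_Reals.
  - apply (is_derive_Rext (fun t => p t * fst (dw t) - p t * fst (dw' t))); [intros; ring|].
    replace (- (r x * (fst lam * (fst (w x) - fst (w' x)) - snd lam * (snd (w x) - snd (w' x)))))
      with (- (r x * (fst lam * fst (w x) - snd lam * snd (w x)))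
            - - (r x * (fst lam * fst (w' x) - snd lam * snd (w' x)))) by ring.
    apply is_derive_Reals. exact (derivable_pt_lim_minus _ _ x _ _ A3 B3).
  - apply (is_derive_Rext (fun t => p t * snd (dw t) - p t * snd (dw' t))); [intros; ring|].
    replace (- (r x * (fst lam * (snd (w x) - snd (w' x)) + snd lam * (fst (w x) - fst (w' x)))))
      with (- (r x * (fst lam * snd (w x) + snd lam * fst (w x)))
            - - (r x * (fst lam * snd (w' x) + snd lam * fst (w' x)))) by ring.
    apply is_derive_Reals. exact (derivable_pt_lim_minus _ _ x _ _ A4 B4).
Qed.

Lemma lim_at_left_end_Csub (f g : R -> Cplx) L L' :
  lim_at_left_end a b f L -> lim_at_left_end a b g L' ->
  lim_at_left_end a b (fun x => Csub (f x) (g x)) (Csub L L').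
Proof.
  intros Hf Hg eps Heps.
  destruct (Hf (eps / 4)) as [t1 [Ht1 H1]]; [lra|].
  destruct (Hg (eps / 4)) as [t2 [Ht2 H2]]; [lra|].
  exists (Rmin t1 t2). split; [apply inI_min; auto|]. intros x Hx Hxt.
  pose proof (Rmin_l t1 t2). pose proof (Rmin_r t1 t2).
  specialize (H1 x Hx ltac:(lra)). specialize (H2 x Hx ltac:(lra)).
  pose proof (Cnorm1_le_Cnorm (Csub (f x) L)). pose proof (Cnorm1_le_Cnorm (Csub (g x) L')).
  eapply Rle_lt_trans; [apply Cnorm_le_Cnorm1|]. unfold Cnorm1, Csub in *; cbn [fst snd] in *.
  pose proof (Rabs_triang (fst (f x) - fst L) (- (fst (g x) - fst L'))).
  pose proof (Rabs_triang (snd (f x) - snd L) (- (snd (g x) - snd L'))).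
  rewrite !Rabs_Ropp in *.
  replace (fst (f x) - fst (g x) - (fst L - fst L'))
    with (fst (f x) - fst L + - (fst (g x) - fst L')) by ring.
  replace (snd (f x) - snd (g x) - (snd L - snd L'))
    with (snd (f x) - snd L + - (snd (g x) - snd L')) by ring.
  lra.
Qed.

Lemma lim_at_left_end_ext (f g : R -> Cplx) L :
  (forall x, inI a b x -> f x = g x) -> lim_at_left_end a b f L -> lim_at_left_end a b g L.
Proof.
  intros E Hf eps Heps. destruct (Hf eps Heps) as [t [Ht H]].
  exists t. split; auto. intros x Hx Hxt. rewrite <- E by auto. auto.
Qed.

Lemma lim_at_left_end_C0_Cnorm1 (f : R -> Cplx) : lim_at_left_end a b f C0 ->
  forall eps, 0 < eps -> exists t, inI a b t /\ forall x, inI a b x -> x < t -> Cnorm1 (f x) < eps.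
Proof.
  intros Hf eps Heps. destruct (Hf (eps / 2)) as [t [Ht H]]; [lra|].
  exists t. split; auto. intros x Hx Hxt. specialize (H x Hx Hxt).
  pose proof (Cnorm1_le_Cnorm (Csub (f x) C0)).
  replace (Csub (f x) C0) with (f x) in *
    by (destruct (f x); unfold Csub, C0; simpl; f_equal; ring).
  lra.
Qed.

End Solutions.

(** * The coefficient functions [U n] *)

Section Main.
Variables (a b : option R) (p r : R -> R) (c M : R).
Hypothesis Hp : forall x, inI a b x -> 0 < p x.
Hypothesis Hr : forall x, inI a b x -> 0 < r x.
Hypothesis Hcp : forall x, inI a b x -> continuous p x.
Hypothesis Hcr : forall x, inI a b x -> continuous r x.
Hypothesis Hc : inI a b c.
Hypothesis HM : forall t, inI a b t -> t <= c ->
  RInt (fun y => RInt (fun s => / p s) y c * r y) t c <= M.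

Fixpoint U (n : nat) : R -> R :=
  match n with
  | O => fun _ => 1
  | S m => Ileft a b (fun s => Ileft a b (fun y => r y * U m y) s / p s)
  end.

Definition V n := Ileft a b (fun y => r y * U n y).

(* [r] itself, written so that [V 0] is [Ileft a b rU0] by conversion. *)
Definition rU0 y : R := r y * U 0 y.

Definition P_to_c y : R := RInt (fun s => / p s) y c.

Lemma continuous_invp x : inI a b x -> continuous (fun s => / p s) x.
Proof. intros Hx. apply (continuous_Rinv_comp p x); auto. specialize (Hp x Hx). lra. Qed.

Lemma continuous_rU0 x : inI a b x -> continuous rU0 x.
Proof. intros Hx. apply continuous_Rmult; auto. apply continuous_Rconst. Qed.

Lemma rU0_ge_0 x : inI a b x -> 0 <= rU0 x.
Proof. intros Hx. unfold rU0; simpl. specialize (Hr x Hx). lra. Qed.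

Lemma P_to_c_derive x : inI a b x -> is_derive P_to_c x (- / p x).
Proof. intros Hx. apply (is_derive_RInt_inI' a b (fun s => / p s)); auto using continuous_invp. Qed.

Lemma P_to_c_continuous x : inI a b x -> continuous P_to_c x.
Proof. intros Hx. eapply is_derive_continuous. apply P_to_c_derive; auto. Qed.

Lemma continuous_P_to_c_r x : inI a b x -> continuous (fun y => P_to_c y * r y) x.
Proof. intros Hx. apply continuous_Rmult; auto. apply P_to_c_continuous; auto. Qed.

Lemma P_to_c_decreasing y z : inI a b y -> inI a b z -> y <= z -> P_to_c z <= P_to_c y.
Proof.
  intros Hy Hz Hyz. unfold P_to_c.
  rewrite (RInt_Chasles_inI a b _ y z c) by (auto; apply continuous_invp).
  assert (0 <= RInt (fun s => / p s) y z); [|lra].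
  apply (RInt_ge_0_inI a b); auto; [apply continuous_invp|].
  intros w Hw _. left. apply Rinv_0_lt_compat; auto.
Qed.

Lemma P_to_c_ge_0 y : inI a b y -> y <= c -> 0 <= P_to_c y.
Proof.
  intros Hy Hyc. apply (RInt_ge_0_inI a b); auto; [apply continuous_invp|].
  intros w Hw _. left. apply Rinv_0_lt_compat; auto.
Qed.

(* On [(a, c']] the weight [P_to_c] is at least [P_to_c c' > 0], so the
   hypothesis bounds [∫ r] there. *)
Lemma left_integrable_rU0 : left_integrable a b rU0.
Proof.
  destruct (inI_exists_lt a b c Hc) as [c' [Hc' Hc'c]].
  apply (left_integrable_of_bounded a b rU0 c'); auto using continuous_rU0, rU0_ge_0.
  assert (HP : 0 < P_to_c c').
  { apply RInt_gt_0; auto.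
    - intros w Hw. apply Rinv_0_lt_compat, Hp, (inI_between a b c' c w); auto; lra.
    - intros w Hw. apply continuous_invp, (inI_between a b c' c w); auto. }
  exists (M / P_to_c c'). intros t Ht Htc.
  apply (Rmult_le_reg_r (P_to_c c')); auto.
  replace (M / P_to_c c' * P_to_c c') with M by (field; lra).
  rewrite Rmult_comm, <- RInt_Rscal by (apply (ex_RInt_inI a b); auto using continuous_rU0).
  apply Rle_trans with (RInt (fun y => P_to_c y * r y) t c').
  { apply (RInt_le_inI a b); auto using continuous_P_to_c_r.
    - intros; apply continuous_Rmult; auto using continuous_Rconst, continuous_rU0.
    - intros y Hy Hty. unfold rU0; simpl. rewrite Rmult_1_r.
      apply Rmult_le_compat_r; [left; auto|]. apply P_to_c_decreasing; auto. lra. }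
  apply Rle_trans with (RInt (fun y => P_to_c y * r y) t c); [|apply HM; auto; lra].
  rewrite (RInt_Chasles_inI a b _ t c' c) by (auto; apply continuous_P_to_c_r).
  assert (0 <= RInt (fun y => P_to_c y * r y) c' c); [|lra].
  apply (RInt_ge_0_inI a b); auto using continuous_P_to_c_r; [lra|].
  intros y Hy Hyy. apply Rmult_le_pos; [apply P_to_c_ge_0; auto; lra|left; auto].
Qed.

Definition Rcum := V 0.

Lemma Rcum_derive x : inI a b x -> is_derive Rcum x (rU0 x).
Proof. intros Hx. apply Ileft_derive; auto. apply left_integrable_rU0. Qed.

Lemma Rcum_continuous x : inI a b x -> continuous Rcum x.
Proof. intros Hx. eapply is_derive_continuous. apply Rcum_derive; auto. Qed.

Lemma Rcum_ge_0 x : inI a b x -> 0 <= Rcum x.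
Proof. intros Hx. apply Ileft_ge_0; auto. apply left_integrable_rU0. Qed.

Lemma RInt_rU0 x y : inI a b x -> inI a b y -> RInt rU0 y x = Rcum x - Rcum y.
Proof.
  intros Hx Hy. change Rcum with (Ileft a b rU0).
  rewrite (Ileft_Chasles a b rU0 x y); auto using left_integrable_rU0. lra.
Qed.

Lemma Rcum_increasing x y : inI a b x -> inI a b y -> y <= x -> Rcum y <= Rcum x.
Proof.
  intros Hx Hy Hyx. assert (0 <= RInt rU0 y x); [|rewrite RInt_rU0 in *; auto; lra].
  apply (RInt_ge_0_inI a b); auto using continuous_rU0. intros; apply rU0_ge_0; auto.
Qed.

Lemma Rcum_vanishes eps : 0 < eps ->
  exists t, inI a b t /\ forall x, inI a b x -> x < t -> Rcum x < eps.
Proof. apply (Ileft_vanishes a b rU0 c left_integrable_rU0 Hc). Qed.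

Lemma RInt_P_to_c_r_by_parts t : inI a b t -> t <= c ->
  RInt (fun y => P_to_c y * r y) t c = RInt (fun s => RInt rU0 t s / p s) t c.
Proof.
  intros Ht Htc.
  assert (Hcum : forall y, inI a b y -> is_derive (fun s => RInt rU0 t s) y (rU0 y))
    by (intros; apply (is_derive_RInt_inI a b); auto using continuous_rU0).
  set (g := fun y => (- / p y) * RInt rU0 t y + P_to_c y * rU0 y).
  assert (HD : forall y, inI a b y -> is_derive (fun y => P_to_c y * RInt rU0 t y) y (g y))
    by (intros; apply is_derive_Rmult; auto using P_to_c_derive).
  assert (HC : forall y, inI a b y -> continuous g y).
  { intros y Hy. apply continuous_Rplus; apply continuous_Rmult;
      auto using continuous_Ropp, continuous_invp, P_to_c_continuous, continuous_rU0.
    eapply is_derive_continuous; auto. }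
  pose proof (RInt_inI_derive a b _ g t c HD HC Ht Hc) as E. cbv beta in E.
  assert (E0 : P_to_c c = 0) by (unfold P_to_c; rewrite RInt_point; reflexivity).
  assert (E1 : RInt rU0 t t = 0) by (rewrite RInt_point; reflexivity).
  rewrite E0, E1 in E.
  assert (E2 : RInt g t c
               = RInt (fun y => P_to_c y * r y) t c - RInt (fun s => RInt rU0 t s / p s) t c).
  { rewrite <- RInt_Rminus.
    - apply RInt_ext. intros x _. unfold g, rU0; simpl. unfold Rdiv. ring.
    - apply (ex_RInt_inI a b); auto using continuous_P_to_c_r.
    - apply (ex_RInt_inI a b); auto. intros y Hy.
      apply continuous_Rdiv; auto; [eapply is_derive_continuous; eauto|].
      specialize (Hp y Hy); lra. }
  lra.
Qed.

Definition q s : R := Rcum s / p s.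

Lemma continuous_q x : inI a b x -> continuous q x.
Proof.
  intros Hx. apply continuous_Rdiv; auto using Rcum_continuous. specialize (Hp x Hx); lra.
Qed.

Lemma q_ge_0 x : inI a b x -> 0 <= q x.
Proof.
  intros Hx. apply Rmult_le_pos; [apply Rcum_ge_0; auto|left; apply Rinv_0_lt_compat; auto].
Qed.

(* This is where the integrability hypothesis enters: by parts,
   [∫_t'^c (Rcum s - Rcum t') / p s ds = ∫_t'^c P_to_c r <= M], and
   [Rcum t' * P_to_c t] becomes negligible as [t'] tends to [a]. *)
Lemma left_bounded_q_at_c : left_bounded a b q c.
Proof.
  exists M. intros t Ht Htc. apply Rnot_lt_le. intros Hlt.
  set (eps := RInt q t c - M).
  assert (HK : 0 < P_to_c t + 1) by (pose proof (P_to_c_ge_0 t Ht Htc); lra).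
  assert (Heps : 0 < eps / (P_to_c t + 1)) by (apply Rdiv_lt_0_compat; unfold eps; lra).
  destruct (Rcum_vanishes _ Heps) as [t1 [Ht1 H1]].
  destruct (inI_exists_lt a b _ (inI_min a b t t1 Ht Ht1)) as [t' [Ht' Ht'm]].
  pose proof (Rmin_l t t1). pose proof (Rmin_r t t1).
  set (h := fun s => RInt rU0 t' s / p s).
  assert (Hch : forall x, inI a b x -> continuous h x).
  { intros x Hx. apply continuous_Rdiv; auto; [|specialize (Hp x Hx); lra].
    eapply is_derive_continuous. apply (is_derive_RInt_inI a b); auto using continuous_rU0. }
  assert (E1 : RInt h t' c <= M).
  { unfold h. rewrite <- RInt_P_to_c_r_by_parts; auto; [apply HM|]; auto; lra. }
  assert (E2 : RInt h t c <= RInt h t' c).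
  { rewrite (RInt_Chasles_inI a b h t' t c); auto.
    assert (0 <= RInt h t' t); [|lra].
    apply (RInt_ge_0_inI a b); auto; [lra|]. intros y Hy Hyy. apply Rmult_le_pos.
    - apply (RInt_ge_0_inI a b); auto using continuous_rU0; [lra|]. intros; apply rU0_ge_0; auto.
    - left; apply Rinv_0_lt_compat; auto. }
  assert (E3 : RInt h t c = RInt q t c - Rcum t' * P_to_c t).
  { unfold P_to_c. rewrite <- RInt_Rscal, <- RInt_Rminus.
    - apply RInt_ext. intros x Hx. unfold h, q. rewrite RInt_rU0; auto.
      + unfold Rdiv. apply Rmult_minus_distr_r.
      + apply (inI_between_min_max a b t c); auto; lra.
    - apply (ex_RInt_inI a b); auto using continuous_q.
    - apply (ex_RInt_inI a b); auto.
      intros; apply continuous_Rmult; auto using continuous_Rconst, continuous_invp.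
    - apply (ex_RInt_inI a b); auto using continuous_invp. }
  assert (E4 : Rcum t' * P_to_c t < eps).
  { specialize (H1 t' Ht' ltac:(lra)).
    pose proof (Rcum_ge_0 t' Ht'). pose proof (P_to_c_ge_0 t Ht Htc).
    assert (Rcum t' * P_to_c t <= eps / (P_to_c t + 1) * P_to_c t)
      by (apply Rmult_le_compat_r; lra).
    assert (eps / (P_to_c t + 1) * (P_to_c t + 1) = eps) by (field; lra).
    nra. }
  unfold eps in E4. lra.
Qed.

Lemma left_integrable_q : left_integrable a b q.
Proof.
  apply (left_integrable_of_bounded a b q c); auto using continuous_q, q_ge_0, left_bounded_q_at_c.
Qed.

Definition Q := U 1.

Lemma Q_derive x : inI a b x -> is_derive Q x (q x).
Proof. intros Hx. apply Ileft_derive; auto. apply left_integrable_q. Qed.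

Lemma Q_continuous x : inI a b x -> continuous Q x.
Proof. intros Hx. eapply is_derive_continuous. apply Q_derive; auto. Qed.

Lemma Q_ge_0 x : inI a b x -> 0 <= Q x.
Proof. intros Hx. apply Ileft_ge_0; auto. apply left_integrable_q. Qed.

Lemma Q_increasing x y : inI a b x -> inI a b y -> y <= x -> Q y <= Q x.
Proof.
  intros Hx Hy Hyx. change Q with (Ileft a b q).
  rewrite (Ileft_Chasles a b q x y); auto using left_integrable_q.
  assert (0 <= RInt q y x); [|lra].
  apply (RInt_ge_0_inI a b); auto using continuous_q. intros; apply q_ge_0; auto.
Qed.

Lemma Q_vanishes eps : 0 < eps ->
  exists t, inI a b t /\ forall x, inI a b x -> x < t -> Q x < eps.
Proof. apply (Ileft_vanishes a b q c left_integrable_q Hc). Qed.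

Definition Qpow n x := Q x ^ n / INR (fact n).

Lemma Qpow_ge_0 n x : inI a b x -> 0 <= Qpow n x.
Proof.
  intros Hx. apply Rmult_le_pos; [apply pow_le, Q_ge_0; auto|].
  left; apply Rinv_0_lt_compat, INR_fact_lt_0.
Qed.

Lemma Qpow_increasing n x y : inI a b x -> inI a b y -> y <= x -> Qpow n y <= Qpow n x.
Proof.
  intros Hx Hy Hyx. apply Rmult_le_compat_r; [left; apply Rinv_0_lt_compat, INR_fact_lt_0|].
  apply pow_incr. split; [apply Q_ge_0; auto|apply Q_increasing; auto].
Qed.

Lemma Qpow_derive n x : inI a b x -> is_derive (Qpow (S n)) x (q x * Qpow n x).
Proof.
  intros Hx. unfold Qpow.
  apply (is_derive_Rext (fun y => / INR (fact (S n)) * Q y ^ S n)); [intros y; unfold Rdiv; ring|].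
  replace (q x * (Q x ^ n / INR (fact n)))
    with (/ INR (fact (S n)) * (INR (S n) * q x * Q x ^ pred (S n))).
  - apply is_derive_Rscal, is_derive_pow, Q_derive; auto.
  - simpl pred. rewrite fact_simpl, mult_INR. field.
    split; [apply INR_fact_neq_0|apply not_0_INR; lia].
Qed.

Lemma Qpow_continuous n x : inI a b x -> continuous (Qpow n) x.
Proof.
  intros Hx. apply continuous_Rdiv; auto using continuous_Rpow, Q_continuous, continuous_Rconst.
  apply INR_fact_neq_0.
Qed.

Lemma continuous_q_Qpow n x : inI a b x -> continuous (fun y => q y * Qpow n y) x.
Proof. intros Hx. apply continuous_Rmult; auto using continuous_q, Qpow_continuous. Qed.

(* [q Q^n/n!] is the derivative of [Q^(n+1)/(n+1)!]: this is where the factorials come from. *)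
Lemma RInt_q_Qpow_le n t x : inI a b t -> inI a b x ->
  RInt (fun y => q y * Qpow n y) t x <= Qpow (S n) x.
Proof.
  intros Ht Hx. rewrite (RInt_inI_derive a b (Qpow (S n))); auto using continuous_q_Qpow.
  - pose proof (Qpow_ge_0 (S n) t Ht). lra.
  - intros; apply Qpow_derive; auto.
Qed.

Lemma V_bound_step n : (forall x, inI a b x -> continuous (U n) x) ->
  (forall x, inI a b x -> 0 <= U n x <= Qpow n x) ->
  left_integrable a b (fun y => r y * U n y) /\
  (forall x, inI a b x -> 0 <= V n x <= Rcum x * Qpow n x).
Proof.
  intros Hcont Hb.
  assert (Hkey : forall x t, inI a b x -> inI a b t -> t <= x ->
            RInt (fun y => r y * U n y) t x <= Rcum x * Qpow n x).
  { intros x t Hx Ht Htx.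
    apply Rle_trans with (RInt (fun y => Qpow n x * rU0 y) t x).
    - apply (RInt_le_inI a b); auto.
      + intros; apply continuous_Rmult; auto.
      + intros; apply continuous_Rmult; auto using continuous_Rconst, continuous_rU0.
      + intros y Hy Hyy. unfold rU0; simpl. rewrite Rmult_1_r, (Rmult_comm _ (r y)).
        apply Rmult_le_compat_l; [left; auto|].
        apply Rle_trans with (Qpow n y); [apply Hb; auto|apply Qpow_increasing; auto; lra].
    - rewrite RInt_Rscal, RInt_rU0 by (auto; apply (ex_RInt_inI a b); auto using continuous_rU0).
      pose proof (Qpow_ge_0 n x Hx). pose proof (Rcum_ge_0 t Ht). nra. }
  assert (HG : left_integrable a b (fun y => r y * U n y)).
  { split; [intros; apply continuous_Rmult; auto|split].
    - intros x Hx. apply Rmult_le_pos; [left; auto|apply Hb; auto].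
    - intros x Hx. exists (Rcum x * Qpow n x). intros; apply Hkey; auto. }
  split; auto. intros x Hx. split; [apply Ileft_ge_0; auto|apply Ileft_le; auto].
Qed.

Lemma U_bound_step n : left_integrable a b (fun y => r y * U n y) ->
  (forall x, inI a b x -> 0 <= V n x <= Rcum x * Qpow n x) ->
  left_integrable a b (fun s => V n s / p s) /\
  (forall x, inI a b x -> continuous (U (S n)) x) /\
  (forall x, inI a b x -> 0 <= U (S n) x <= Qpow (S n) x).
Proof.
  intros HG Hb.
  assert (Hcont : forall x, inI a b x -> continuous (fun s => V n s / p s) x).
  { intros x Hx. apply continuous_Rdiv; auto; [|specialize (Hp x Hx); lra].
    eapply is_derive_continuous. apply (Ileft_derive a b (fun y => r y * U n y)); auto. }
  assert (Hkey : forall x t, inI a b x -> inI a b t -> t <= x ->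
            RInt (fun s => V n s / p s) t x <= Qpow (S n) x).
  { intros x t Hx Ht Htx.
    apply Rle_trans with (RInt (fun y => q y * Qpow n y) t x); [|apply RInt_q_Qpow_le; auto].
    apply (RInt_le_inI a b); auto using continuous_q_Qpow.
    intros y Hy Hyy. unfold q, Rdiv.
    replace (Rcum y * / p y * Qpow n y) with ((Rcum y * Qpow n y) * / p y) by ring.
    apply Rmult_le_compat_r; [left; apply Rinv_0_lt_compat; auto|apply Hb; auto]. }
  assert (HG2 : left_integrable a b (fun s => V n s / p s)).
  { split; [auto|split].
    - intros x Hx. apply Rmult_le_pos; [apply Hb; auto|left; apply Rinv_0_lt_compat; auto].
    - intros x Hx. exists (Qpow (S n) x). intros; apply Hkey; auto. }
  change (U (S n)) with (Ileft a b (fun s => V n s / p s)).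
  split; [auto|split].
  - intros x Hx. eapply is_derive_continuous. apply Ileft_derive; auto.
  - intros x Hx. split; [apply Ileft_ge_0; auto|apply Ileft_le; auto].
Qed.

Lemma U_continuous_bounded n : (forall x, inI a b x -> continuous (U n) x) /\
  (forall x, inI a b x -> 0 <= U n x <= Qpow n x).
Proof.
  induction n as [|n [H1 H2]].
  - split; intros; [apply continuous_Rconst|unfold Qpow; simpl; lra].
  - destruct (V_bound_step n H1 H2) as [H3 H4].
    destruct (U_bound_step n H3 H4) as [_ [H5 H6]]. auto.
Qed.

Lemma left_integrable_rU n : left_integrable a b (fun y => r y * U n y).
Proof. destruct (U_continuous_bounded n) as [H1 H2]. apply (V_bound_step n H1 H2). Qed.

Lemma V_bound n x : inI a b x -> 0 <= V n x <= Rcum x * Qpow n x.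
Proof. destruct (U_continuous_bounded n) as [H1 H2]. apply (V_bound_step n H1 H2). Qed.

Lemma U_bound n x : inI a b x -> 0 <= U n x <= Qpow n x.
Proof. apply U_continuous_bounded. Qed.

Lemma V_derive n x : inI a b x -> is_derive (V n) x (r x * U n x).
Proof.
  intros Hx. apply (Ileft_derive a b (fun y => r y * U n y)); auto using left_integrable_rU.
Qed.

Lemma V_continuous n x : inI a b x -> continuous (V n) x.
Proof. intros Hx. eapply is_derive_continuous. apply V_derive; auto. Qed.

Definition dU n y := match n with O => 0 | S m => V m y / p y end.

Lemma U_derive n x : inI a b x -> is_derive (U n) x (dU n x).
Proof.
  intros Hx. destruct n as [|n]; [apply is_derive_Rconst|].
  change (U (S n)) with (Ileft a b (fun s => V n s / p s)).
  apply (Ileft_derive a b (fun s => V n s / p s)); auto.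
  apply (U_bound_step n (left_integrable_rU n)). intros; apply V_bound; auto.
Qed.

Lemma dU_continuous n x : inI a b x -> continuous (dU n) x.
Proof.
  intros Hx. destruct n; [apply continuous_Rconst|].
  apply continuous_Rdiv; auto using V_continuous. specialize (Hp x Hx); lra.
Qed.

Definition SU (e : nat -> R) x := Series (fun n => e n * U n x).
Definition SV (e : nat -> R) x := Series (fun n => e (S n) * V n x).

Section CoefficientSeries.
Variables (e : nat -> R) (L : R).
Hypothesis HL : 0 <= L.
Hypothesis He : forall n, Rabs (e n) <= L ^ n.

Lemma SU_term_bound n y : inI a b y -> Rabs (e n * U n y) <= (L * Q y) ^ n / INR (fact n).
Proof.
  intros Hy. destruct (U_bound n y Hy) as [H1 H2].
  rewrite Rabs_mult, (Rabs_right (U n y)), Rpow_mult_distr by lra.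
  replace (L ^ n * Q y ^ n / INR (fact n)) with (L ^ n * Qpow n y) by (unfold Qpow, Rdiv; ring).
  apply Rmult_le_compat; auto using Rabs_pos.
Qed.

Lemma SV_term_bound n y : inI a b y ->
  Rabs (e (S n) * V n y) <= L * Rcum y * ((L * Q y) ^ n / INR (fact n)).
Proof.
  intros Hy. destruct (V_bound n y Hy) as [H1 H2].
  rewrite Rabs_mult, (Rabs_right (V n y)), Rpow_mult_distr by lra.
  replace (L * Rcum y * (L ^ n * Q y ^ n / INR (fact n))) with (L ^ S n * (Rcum y * Qpow n y))
    by (unfold Qpow, Rdiv; simpl; ring).
  apply Rmult_le_compat; auto using Rabs_pos.
Qed.

Lemma ex_series_SU y : inI a b y -> ex_series (fun n => e n * U n y).
Proof.
  intros Hy. apply (ex_series_Rle _ (fun n => (L * Q y) ^ n / INR (fact n)));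
    [intros; apply SU_term_bound; auto|apply ex_series_exp].
Qed.

Lemma ex_series_SV y : inI a b y -> ex_series (fun n => e (S n) * V n y).
Proof.
  intros Hy. apply (ex_series_Rle _ (fun n => L * Rcum y * ((L * Q y) ^ n / INR (fact n))));
    [intros; apply SV_term_bound; auto|apply ex_series_Rscal, ex_series_exp].
Qed.

(* On such a ball the [U n] and [V n] are dominated by their values at [x1],
   which is the domination needed to differentiate series in them termwise. *)
Lemma local_bounds x : inI a b x -> exists d x1, 0 < d /\ inI a b x1 /\
  forall y, Rabs (y - x) < d -> inI a b y /\ y <= x1 /\ p x / 2 <= p y /\ r y <= r x + 1.
Proof.
  intros Hx. destruct (inI_ball a b x Hx) as [d0 [Hd0 H0]].
  destruct (inI_exists_gt a b x Hx) as [x1 [Hx1 Hxx1]].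
  pose proof (Hp x Hx).
  destruct (continuous_Rabs_lt p x (p x / 2) (Hcp x Hx)) as [d1 [Hd1 H1]]; [lra|].
  destruct (continuous_Rabs_lt r x 1 (Hcr x Hx)) as [d2 [Hd2 H2]]; [lra|].
  exists (Rmin (Rmin d0 (x1 - x)) (Rmin d1 d2)), x1.
  pose proof (Rmin_l (Rmin d0 (x1 - x)) (Rmin d1 d2)).
  pose proof (Rmin_r (Rmin d0 (x1 - x)) (Rmin d1 d2)).
  pose proof (Rmin_l d0 (x1 - x)). pose proof (Rmin_r d0 (x1 - x)).
  pose proof (Rmin_l d1 d2). pose proof (Rmin_r d1 d2).
  split; [repeat apply Rmin_glb_lt; lra|]. split; [auto|].
  intros y Hy. split; [apply H0; lra|]. split; [apply Rabs_def2 in Hy; lra|].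
  specialize (H1 y ltac:(lra)). specialize (H2 y ltac:(lra)).
  apply Rabs_def2 in H1. apply Rabs_def2 in H2. split; lra.
Qed.

Lemma SU_derive x : inI a b x -> derivable_pt_lim (SU e) x (SV e x / p x).
Proof.
  intros Hx. destruct (local_bounds x Hx) as [d [x1 [Hd [Hx1 Hb]]]].
  pose proof (Hp x Hx) as Hpx.
  set (Mb := fun n => L ^ n * Rcum x1 * Qpow (pred n) x1 * (2 / p x)).
  assert (HMb : ex_series Mb).
  { apply (@ex_series_incr_1 R_AbsRing R_NormedModule Mb).
    apply (ex_series_Rext (fun n => (L * Rcum x1 * (2 / p x)) * ((L * Q x1) ^ n / INR (fact n)))).
    - intros n. unfold Mb, Qpow. simpl pred. rewrite Rpow_mult_distr. simpl. unfold Rdiv. ring.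
    - apply ex_series_Rscal, ex_series_exp. }
  assert (Hg : forall n y, Rabs (y - x) < d -> Rabs (e n * dU n y) <= Mb n).
  { intros n y Hy. destruct (Hb y Hy) as [Hy1 [Hy2 [Hy3 _]]]. unfold Mb.
    pose proof (Rcum_ge_0 x1 Hx1). pose proof (Qpow_ge_0 (pred n) x1 Hx1).
    assert (0 <= L ^ n) by (apply pow_le; auto).
    assert (0 < 2 / p x) by (apply Rdiv_lt_0_compat; lra).
    destruct n as [|n]; simpl dU.
    - rewrite Rmult_0_r, Rabs_R0.
      apply Rmult_le_pos; [apply Rmult_le_pos; [apply Rmult_le_pos|]|]; lra.
    - simpl pred. rewrite Rabs_mult.
      replace (L ^ S n * Rcum x1 * Qpow n x1 * (2 / p x))
        with (L ^ S n * (Rcum x1 * Qpow n x1 * (2 / p x))) by ring.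
      apply Rmult_le_compat; auto using Rabs_pos.
      destruct (V_bound n y Hy1) as [V1 V2].
      assert (Hpy : 0 < p y) by (apply Hp; auto).
      unfold Rdiv. rewrite Rabs_mult, (Rabs_right (V n y)) by lra.
      rewrite Rabs_right by (apply Rle_ge; left; apply Rinv_0_lt_compat; auto).
      apply Rmult_le_compat; auto; [left; apply Rinv_0_lt_compat; auto| |].
      + apply Rle_trans with (Rcum y * Qpow n y); auto.
        apply Rmult_le_compat; auto using Rcum_ge_0, Qpow_ge_0, Rcum_increasing, Qpow_increasing.
      + replace (2 * / p x) with (/ (p x / 2)) by (field; lra). apply Rinv_le_contravar; lra. }
  assert (E : Series (fun n => e n * dU n x) = SV e x / p x).
  { rewrite Series_incr_1.
    - simpl dU. rewrite Rmult_0_r, Rplus_0_l. unfold SV, Rdiv.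
      rewrite <- Series_scal_r. apply Series_ext. intros n. ring.
    - apply (ex_series_Rle _ Mb); auto. intros n. apply Hg. rewrite Rminus_diag, Rabs_R0. auto. }
  rewrite <- E.
  apply (derivable_pt_lim_Series (fun n y => e n * U n y) (fun n y => e n * dU n y) x d Mb);
    auto.
  - intros n y Hy. apply is_derive_Reals, is_derive_Rscal, U_derive, Hb; auto.
  - intros n y Hy. apply continuous_Rmult; [apply continuous_Rconst|apply dU_continuous, Hb; auto].
  - intros y Hy. apply ex_series_SU, Hb; auto.
Qed.

Lemma SV_derive x : inI a b x ->
  derivable_pt_lim (SV e) x (r x * Series (fun n => e (S n) * U n x)).
Proof.
  intros Hx. destruct (local_bounds x Hx) as [d [x1 [Hd [Hx1 Hb]]]].
  pose proof (Hr x Hx) as Hrx.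
  set (Mb := fun n => L ^ S n * (r x + 1) * Qpow n x1).
  assert (HMb : ex_series Mb).
  { apply (ex_series_Rext (fun n => (L * (r x + 1)) * ((L * Q x1) ^ n / INR (fact n)))).
    - intros n. unfold Mb, Qpow. rewrite Rpow_mult_distr. simpl. unfold Rdiv. ring.
    - apply ex_series_Rscal, ex_series_exp. }
  assert (Hg : forall n y, Rabs (y - x) < d -> Rabs (e (S n) * (r y * U n y)) <= Mb n).
  { intros n y Hy. destruct (Hb y Hy) as [Hy1 [Hy2 [_ Hy4]]]. unfold Mb.
    destruct (U_bound n y Hy1) as [U1 U2]. pose proof (Hr y Hy1).
    rewrite Rmult_assoc, Rabs_mult. apply Rmult_le_compat; auto using Rabs_pos.
    rewrite Rabs_right by (apply Rle_ge, Rmult_le_pos; lra).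
    apply Rmult_le_compat; try lra. apply Rle_trans with (Qpow n y); auto.
    apply Qpow_increasing; auto. }
  assert (E : Series (fun n => e (S n) * (r x * U n x)) = r x * Series (fun n => e (S n) * U n x)).
  { rewrite <- Series_scal_l. apply Series_ext. intros n. ring. }
  rewrite <- E.
  apply (derivable_pt_lim_Series (fun n y => e (S n) * V n y)
           (fun n y => e (S n) * (r y * U n y)) x d Mb); auto.
  - intros n y Hy. apply is_derive_Reals, is_derive_Rscal, V_derive, Hb; auto.
  - intros n y Hy. destruct (Hb y Hy) as [Hy1 _].
    apply continuous_Rmult; [apply continuous_Rconst|apply continuous_Rmult; auto].
    apply U_continuous_bounded; auto.
  - intros y Hy. apply ex_series_SV, Hb; auto.
Qed.

Lemma SU_tends_to_e0 eps : 0 < eps -> exists t, inI a b t /\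
  forall y, inI a b y -> y < t -> Rabs (SU e y - e 0%nat) < eps.
Proof.
  intros Heps. set (K := L * exp (L * Q c) + 1).
  assert (HK : 0 < K) by (unfold K; pose proof (exp_pos (L * Q c)); nra).
  destruct (Q_vanishes (eps / K)) as [t [Ht H]]; [apply Rdiv_lt_0_compat; lra|].
  exists (Rmin t c). split; [apply inI_min; auto|]. intros y Hy Hyt.
  pose proof (Rmin_l t c). pose proof (Rmin_r t c).
  specialize (H y Hy ltac:(lra)).
  pose proof (Q_ge_0 y Hy) as HQ. pose proof (Q_increasing c y Hc Hy ltac:(lra)) as HQc.
  assert (HLQ : 0 <= L * Q y) by nra.
  unfold SU. rewrite Series_incr_1 by (apply ex_series_SU; auto). simpl U at 1.
  replace (e 0%nat * 1 + Series (fun k => e (S k) * U (S k) y) - e 0%nat)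
    with (Series (fun k => e (S k) * U (S k) y)) by ring.
  eapply Rle_lt_trans.
  { apply (Series_Rabs_le _ (fun n => (L * Q y) * ((L * Q y) ^ n / INR (fact n)))).
    - intros n. eapply Rle_trans; [apply SU_term_bound; auto|].
      rewrite fact_simpl, mult_INR. simpl pow.
      assert (0 <= (L * Q y) ^ n) by (apply pow_le; auto).
      assert (0 < INR (fact n)) by apply INR_fact_lt_0.
      assert (1 <= INR (S n)) by (rewrite S_INR; pose proof (pos_INR n); lra).
      unfold Rdiv. rewrite Rinv_mult, Rmult_assoc.
      apply Rmult_le_compat_l; auto. rewrite (Rmult_comm (/ INR (S n))), <- Rmult_assoc.
      rewrite <- (Rmult_1_r ((L * Q y) ^ n * / INR (fact n))) at 2.
      apply Rmult_le_compat_l; [apply Rmult_le_pos; auto; left; apply Rinv_0_lt_compat; auto|].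
      replace 1 with (/ 1) by field. apply Rinv_le_contravar; lra.
    - apply ex_series_Rscal, ex_series_exp. }
  rewrite Series_scal_l, Series_exp.
  assert (exp (L * Q y) <= exp (L * Q c)) by (apply exp_le_exp_compat, Rmult_le_compat_l; auto).
  assert (L * Q y * exp (L * Q y) <= Q y * K).
  { unfold K. pose proof (exp_pos (L * Q y)). nra. }
  assert (Q y * K < eps / K * K) by (apply Rmult_lt_compat_r; auto).
  replace (eps / K * K) with eps in * by (field; lra). lra.
Qed.

Lemma SV_vanishes eps : 0 < eps -> exists t, inI a b t /\
  forall y, inI a b y -> y < t -> Rabs (SV e y) < eps.
Proof.
  intros Heps. set (K := L * exp (L * Q c) + 1).
  assert (HK : 0 < K) by (unfold K; pose proof (exp_pos (L * Q c)); nra).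
  destruct (Rcum_vanishes (eps / K)) as [t [Ht H]]; [apply Rdiv_lt_0_compat; lra|].
  exists (Rmin t c). split; [apply inI_min; auto|]. intros y Hy Hyt.
  pose proof (Rmin_l t c). pose proof (Rmin_r t c).
  specialize (H y Hy ltac:(lra)).
  pose proof (Q_ge_0 y Hy) as HQ. pose proof (Q_increasing c y Hc Hy ltac:(lra)) as HQc.
  pose proof (Rcum_ge_0 y Hy) as HR.
  unfold SV. eapply Rle_lt_trans.
  { apply (Series_Rabs_le _ (fun n => L * Rcum y * ((L * Q y) ^ n / INR (fact n)))).
    - intros n. apply SV_term_bound; auto.
    - apply ex_series_Rscal, ex_series_exp. }
  rewrite Series_scal_l, Series_exp.
  assert (exp (L * Q y) <= exp (L * Q c)) by (apply exp_le_exp_compat, Rmult_le_compat_l; auto).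
  assert (L * Rcum y * exp (L * Q y) <= Rcum y * K).
  { unfold K. pose proof (exp_pos (L * Q y)). assert (0 <= L * Rcum y) by nra. nra. }
  assert (Rcum y * K < eps / K * K) by (apply Rmult_lt_compat_r; auto).
  replace (eps / K * K) with eps in * by (field; lra). lra.
Qed.

End CoefficientSeries.

(** * The solution [w_λ] *)

Definition neg_pow_re (lam : Cplx) n := (-1) ^ n * fst (Cpow lam n).
Definition neg_pow_im (lam : Cplx) n := (-1) ^ n * snd (Cpow lam n).

Definition w_sol (lam : Cplx) x := Cseries (fun n => (-1) ^ n * U n x) lam.

Definition dw_sol (lam : Cplx) x : Cplx :=
  (SV (neg_pow_re lam) x / p x, SV (neg_pow_im lam) x / p x).

Lemma neg_pow_re_bound lam n : Rabs (neg_pow_re lam n) <= Cnorm1 lam ^ n.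
Proof.
  unfold neg_pow_re. rewrite Rabs_mult, pow_1_abs, Rmult_1_l.
  eapply Rle_trans; [apply Rabs_fst_le_Cnorm1|apply Cnorm1_Cpow].
Qed.

Lemma neg_pow_im_bound lam n : Rabs (neg_pow_im lam n) <= Cnorm1 lam ^ n.
Proof.
  unfold neg_pow_im. rewrite Rabs_mult, pow_1_abs, Rmult_1_l.
  eapply Rle_trans; [apply Rabs_snd_le_Cnorm1|apply Cnorm1_Cpow].
Qed.

Lemma neg_pow_re_S lam n :
  neg_pow_re lam (S n) = - (fst lam * neg_pow_re lam n - snd lam * neg_pow_im lam n).
Proof. unfold neg_pow_re, neg_pow_im. cbn [Cpow pow]. unfold Cmul; cbn [fst snd]. ring. Qed.

Lemma neg_pow_im_S lam n :
  neg_pow_im lam (S n) = - (fst lam * neg_pow_im lam n + snd lam * neg_pow_re lam n).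
Proof. unfold neg_pow_re, neg_pow_im. cbn [Cpow pow]. unfold Cmul; cbn [fst snd]. ring. Qed.

Lemma fst_w_sol lam x : fst (w_sol lam x) = SU (neg_pow_re lam) x.
Proof. unfold w_sol, Cseries, SU, neg_pow_re; simpl. apply Series_ext. intros; ring. Qed.

Lemma snd_w_sol lam x : snd (w_sol lam x) = SU (neg_pow_im lam) x.
Proof. unfold w_sol, Cseries, SU, neg_pow_im; simpl. apply Series_ext. intros; ring. Qed.

Lemma quasi_deriv_SV_derive e L x : 0 <= L -> (forall n, Rabs (e n) <= L ^ n) -> inI a b x ->
  derivable_pt_lim (fun t => p t * (SV e t / p t)) x (r x * Series (fun n => e (S n) * U n x)).
Proof.
  intros HL He Hx. apply is_derive_Reals. apply (is_derive_Rext_inI a b (SV e)); auto.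
  - intros y Hy. field. specialize (Hp y Hy); lra.
  - apply is_derive_Reals. apply SV_derive with (L := L); auto.
Qed.

Lemma w_sol_solves lam : solves a b p r lam (w_sol lam) (dw_sol lam).
Proof.
  pose proof (Cnorm1_ge_0 lam) as HL. pose proof (neg_pow_re_bound lam) as Hre.
  pose proof (neg_pow_im_bound lam) as Him.
  intros x Hx. unfold dw_sol; cbn [fst snd].
  assert (exre := ex_series_SU (neg_pow_re lam) (Cnorm1 lam) Hre x Hx).
  assert (exim := ex_series_SU (neg_pow_im lam) (Cnorm1 lam) Him x Hx).
  assert (exre' := ex_series_Rscal _ (- fst lam) exre).
  assert (exim' := ex_series_Rscal _ (- fst lam) exim).
  unfold Cmul; cbn [fst snd]. rewrite fst_w_sol, snd_w_sol. unfold SU.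
  split; [|split; [|split]].
  - apply (derivable_pt_lim_ext (SU (neg_pow_re lam))); [intros; symmetry; apply fst_w_sol|].
    apply SU_derive with (L := Cnorm1 lam); auto.
  - apply (derivable_pt_lim_ext (SU (neg_pow_im lam))); [intros; symmetry; apply snd_w_sol|].
    apply SU_derive with (L := Cnorm1 lam); auto.
  - replace (- (r x * (fst lam * Series (fun n => neg_pow_re lam n * U n x)
                       - snd lam * Series (fun n => neg_pow_im lam n * U n x))))
      with (r x * Series (fun n => neg_pow_re lam (S n) * U n x));
      [apply quasi_deriv_SV_derive with (L := Cnorm1 lam); auto|].
    rewrite (Series_ext _ (fun n => (- fst lam) * (neg_pow_re lam n * U n x)
                                    + snd lam * (neg_pow_im lam n * U n x)))
      by (intros n; rewrite neg_pow_re_S; ring).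
    rewrite Series_plus, !Series_scal_l; [ring|auto|apply ex_series_Rscal; auto].
  - replace (- (r x * (fst lam * Series (fun n => neg_pow_im lam n * U n x)
                       + snd lam * Series (fun n => neg_pow_re lam n * U n x))))
      with (r x * Series (fun n => neg_pow_im lam (S n) * U n x));
      [apply quasi_deriv_SV_derive with (L := Cnorm1 lam); auto|].
    rewrite (Series_ext _ (fun n => (- fst lam) * (neg_pow_im lam n * U n x)
                                    + (- snd lam) * (neg_pow_re lam n * U n x)))
      by (intros n; rewrite neg_pow_im_S; ring).
    rewrite Series_plus, !Series_scal_l; [ring|auto|apply ex_series_Rscal; auto].
Qed.

Lemma w_sol_tends_to_1 lam : lim_at_left_end a b (w_sol lam) Defs.C1.
Proof.
  pose proof (Cnorm1_ge_0 lam) as HL. intros eps Heps.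
  destruct (SU_tends_to_e0 (neg_pow_re lam) (Cnorm1 lam) HL (neg_pow_re_bound lam) (eps / 2))
    as [t1 [Ht1 H1]]; [lra|].
  destruct (SU_tends_to_e0 (neg_pow_im lam) (Cnorm1 lam) HL (neg_pow_im_bound lam) (eps / 2))
    as [t2 [Ht2 H2]]; [lra|].
  exists (Rmin t1 t2). split; [apply inI_min; auto|]. intros x Hx Hxt.
  pose proof (Rmin_l t1 t2). pose proof (Rmin_r t1 t2).
  specialize (H1 x Hx ltac:(lra)). specialize (H2 x Hx ltac:(lra)).
  eapply Rle_lt_trans; [apply Cnorm_le_Cnorm1|].
  unfold Cnorm1, Csub, Defs.C1; cbn [fst snd]. rewrite fst_w_sol, snd_w_sol.
  unfold neg_pow_re, neg_pow_im in *. simpl in H1, H2.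
  replace (1 * 1) with 1 in H1 by ring. replace (1 * 0) with 0 in H2 by ring.
  lra.
Qed.

Lemma quasi_deriv_w_sol_tends_to_0 lam :
  lim_at_left_end a b (fun x => (p x * fst (dw_sol lam x), p x * snd (dw_sol lam x))) Defs.C0.
Proof.
  pose proof (Cnorm1_ge_0 lam) as HL. intros eps Heps.
  destruct (SV_vanishes (neg_pow_re lam) (Cnorm1 lam) HL (neg_pow_re_bound lam) (eps / 2))
    as [t1 [Ht1 H1]]; [lra|].
  destruct (SV_vanishes (neg_pow_im lam) (Cnorm1 lam) HL (neg_pow_im_bound lam) (eps / 2))
    as [t2 [Ht2 H2]]; [lra|].
  exists (Rmin t1 t2). split; [apply inI_min; auto|]. intros x Hx Hxt.
  pose proof (Rmin_l t1 t2). pose proof (Rmin_r t1 t2).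
  specialize (H1 x Hx ltac:(lra)). specialize (H2 x Hx ltac:(lra)).
  eapply Rle_lt_trans; [apply Cnorm_le_Cnorm1|].
  unfold Cnorm1, Csub, Defs.C0, dw_sol; cbn [fst snd].
  assert (p x <> 0) by (specialize (Hp x Hx); lra).
  replace (p x * (SV (neg_pow_re lam) x / p x) - 0) with (SV (neg_pow_re lam) x) by (field; auto).
  replace (p x * (SV (neg_pow_im lam) x / p x) - 0) with (SV (neg_pow_im lam) x) by (field; auto).
  lra.
Qed.

Lemma w_sol_entire_exponential_type x : inI a b x ->
  entire (fun lam => w_sol lam x) /\ exponential_type (fun lam => w_sol lam x).
Proof.
  intros Hx.
  assert (Hcf : forall n, Rabs ((-1) ^ n * U n x) <= Q x ^ n / INR (fact n)).
  { intros n. rewrite Rabs_mult, pow_1_abs, Rmult_1_l. destruct (U_bound n x Hx).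
    rewrite Rabs_right by lra. auto. }
  pose proof (Q_ge_0 x Hx).
  split; [apply (Cseries_entire _ (Q x))|apply (Cseries_exponential_type _ (Q x))]; auto.
Qed.

(** * Uniqueness *)

Section TrivialData.
Variables (lam : Cplx) (v dv : R -> Cplx).
Let pdv x : Cplx := (p x * fst (dv x), p x * snd (dv x)).

Hypothesis Hsol : solves a b p r lam v dv.
Hypothesis Hv0 : lim_at_left_end a b v Defs.C0.
Hypothesis Hpdv0 : lim_at_left_end a b pdv Defs.C0.

Lemma v_derive y : inI a b y ->
  is_derive (fun t => fst (v t)) y (fst (dv y)) /\ is_derive (fun t => snd (v t)) y (snd (dv y)).
Proof. intros Hy. destruct (Hsol y Hy) as [H1 [H2 _]]. split; apply is_derive_Reals; auto. Qed.

Lemma pdv_derive y : inI a b y ->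
  is_derive (fun t => fst (pdv t)) y (- (r y * fst (Cmul lam (v y)))) /\
  is_derive (fun t => snd (pdv t)) y (- (r y * snd (Cmul lam (v y)))).
Proof. intros Hy. destruct (Hsol y Hy) as [_ [_ [H3 H4]]]. split; apply is_derive_Reals; auto. Qed.

Lemma v_continuous y : inI a b y ->
  continuous (fun t => fst (v t)) y /\ continuous (fun t => snd (v t)) y.
Proof. intros Hy. destruct (v_derive y Hy). split; eapply is_derive_continuous; eauto. Qed.

Lemma dv_continuous y : inI a b y ->
  continuous (fun t => fst (dv t)) y /\ continuous (fun t => snd (dv t)) y.
Proof.
  intros Hy. destruct (pdv_derive y Hy) as [H1 H2].
  assert (Hpy : p y <> 0) by (specialize (Hp y Hy); lra).
  assert (E : forall (g : R -> R), locally y (fun t => (p t * g t) / p t = g t)).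
  { intros g. generalize (inI_locally a b y Hy). apply filter_imp. intros t Ht.
    field. specialize (Hp t Ht); lra. }
  split; apply (continuous_ext_loc _ _ y (E _));
    apply continuous_Rdiv; auto; eapply is_derive_continuous; eauto.
Qed.

Lemma continuous_Cmul_lam_v y : inI a b y ->
  continuous (fun t => - (r t * fst (Cmul lam (v t)))) y /\
  continuous (fun t => - (r t * snd (Cmul lam (v t)))) y.
Proof.
  intros Hy. destruct (v_continuous y Hy). unfold Cmul; cbn [fst snd].
  split; apply continuous_Ropp, continuous_Rmult; auto;
    [apply continuous_Rminus|apply continuous_Rplus];
    apply continuous_Rmult; auto; apply continuous_Rconst.
Qed.

Lemma quasi_deriv_bound_step B n x0 : 0 <= B ->
  (forall s, inI a b s -> s <= x0 -> Cnorm1 (v s) <= B * Qpow n s) ->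
  forall s, inI a b s -> s <= x0 -> Cnorm1 (pdv s) <= Cnorm1 lam * B * (Rcum s * Qpow n s).
Proof.
  intros HB Hv s Hs Hsx.
  apply (le_of_vanishing_error a b _ _ (fun t => Cnorm1 (pdv t)) s Hs);
    [|exact (lim_at_left_end_C0_Cnorm1 a b pdv Hpdv0)].
  intros t Ht Hts.
  assert (Hg1 := fun y Hy => proj1 (continuous_Cmul_lam_v y Hy)).
  assert (Hg2 := fun y Hy => proj2 (continuous_Cmul_lam_v y Hy)).
  pose proof (Rabs_le_RInt_Rabs_derive a b (fun t => fst (pdv t)) _ t s
                (fun y Hy => proj1 (pdv_derive y Hy)) Hg1 Ht Hs Hts) as E1.
  pose proof (Rabs_le_RInt_Rabs_derive a b (fun t => snd (pdv t)) _ t s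
                (fun y Hy => proj2 (pdv_derive y Hy)) Hg2 Ht Hs Hts) as E2.
  cbv beta in E1, E2.
  pose proof (Cnorm1_ge_0 lam). pose proof (Qpow_ge_0 n s Hs). pose proof (Rcum_ge_0 t Ht).
  assert (Hint : RInt (fun y => Rabs (- (r y * fst (Cmul lam (v y))))) t s
               + RInt (fun y => Rabs (- (r y * snd (Cmul lam (v y))))) t s
               <= Cnorm1 lam * B * Qpow n s * (Rcum s - Rcum t)).
  { rewrite <- RInt_Rplus
      by (apply (ex_RInt_inI a b); auto; intros; apply continuous_Rabs_comp; auto).
    rewrite <- RInt_rU0, <- RInt_Rscal
      by (auto; apply (ex_RInt_inI a b); auto; apply continuous_rU0).
    apply (RInt_le_inI a b); auto.
    - intros; apply continuous_Rplus; apply continuous_Rabs_comp; auto.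
    - intros; apply continuous_Rmult; [apply continuous_Rconst|apply continuous_rU0; auto].
    - intros y Hy Hyy. pose proof (Hr y Hy).
      rewrite !Rabs_Ropp, !Rabs_mult, Rabs_right by lra. unfold rU0; simpl.
      rewrite <- Rmult_plus_distr_l.
      replace (Cnorm1 lam * B * Qpow n s * (r y * 1))
        with (r y * (Cnorm1 lam * (B * Qpow n s))) by ring.
      apply Rmult_le_compat_l; [lra|]. fold (Cnorm1 (Cmul lam (v y))).
      eapply Rle_trans; [apply Cnorm1_mul|]. apply Rmult_le_compat_l; auto.
      eapply Rle_trans; [apply Hv; auto; lra|].
      apply Rmult_le_compat_l; auto. apply Qpow_increasing; auto; lra. }
  assert (0 <= Cnorm1 lam * B * Qpow n s * Rcum t)
    by (apply Rmult_le_pos; [apply Rmult_le_pos; [apply Rmult_le_pos|]|]; auto).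
  cbv beta. unfold Cnorm1 at 1 3. lra.
Qed.

Lemma v_bound_step B n x0 : 0 <= B ->
  (forall s, inI a b s -> s <= x0 -> Cnorm1 (pdv s) <= B * (Rcum s * Qpow n s)) ->
  forall s, inI a b s -> s <= x0 -> Cnorm1 (v s) <= B * Qpow (S n) s.
Proof.
  intros HB Hpdv s Hs Hsx.
  apply (le_of_vanishing_error a b _ _ (fun t => Cnorm1 (v t)) s Hs);
    [|exact (lim_at_left_end_C0_Cnorm1 a b v Hv0)].
  intros t Ht Hts.
  assert (Hd1 := fun y Hy => proj1 (dv_continuous y Hy)).
  assert (Hd2 := fun y Hy => proj2 (dv_continuous y Hy)).
  pose proof (Rabs_le_RInt_Rabs_derive a b (fun t => fst (v t)) _ t s
                (fun y Hy => proj1 (v_derive y Hy)) Hd1 Ht Hs Hts) as E1.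
  pose proof (Rabs_le_RInt_Rabs_derive a b (fun t => snd (v t)) _ t s
                (fun y Hy => proj2 (v_derive y Hy)) Hd2 Ht Hs Hts) as E2.
  cbv beta in E1, E2. pose proof (Qpow_ge_0 (S n) t Ht).
  assert (Hint : RInt (fun y => Rabs (fst (dv y))) t s + RInt (fun y => Rabs (snd (dv y))) t s
                 <= B * (Qpow (S n) s - Qpow (S n) t)).
  { rewrite <- RInt_Rplus
      by (apply (ex_RInt_inI a b); auto; intros; apply continuous_Rabs_comp; auto).
    rewrite <- (RInt_inI_derive a b (Qpow (S n)) (fun y => q y * Qpow n y)); auto;
      [|intros; apply Qpow_derive; auto
       |intros; apply continuous_Rmult; [apply continuous_q|apply Qpow_continuous]; auto].
    rewrite <- RInt_Rscal by (apply (ex_RInt_inI a b); auto; intros;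
      apply continuous_Rmult; [apply continuous_q|apply Qpow_continuous]; auto).
    apply (RInt_le_inI a b); auto.
    - intros; apply continuous_Rplus; apply continuous_Rabs_comp; auto.
    - intros; apply continuous_Rmult; [apply continuous_Rconst|].
      apply continuous_Rmult; [apply continuous_q|apply Qpow_continuous]; auto.
    - intros y Hy Hyy. pose proof (Hp y Hy) as Hpy.
      specialize (Hpdv y Hy ltac:(lra)). unfold Cnorm1, pdv in Hpdv; cbn [fst snd] in Hpdv.
      rewrite !Rabs_mult, (Rabs_right (p y)) in Hpdv by lra.
      unfold q. apply (Rmult_le_reg_l (p y)); auto.
      replace (p y * (B * (Rcum y / p y * Qpow n y))) with (B * (Rcum y * Qpow n y))
        by (field; lra).
      lra. }
  assert (0 <= B * Qpow (S n) t) by (apply Rmult_le_pos; auto).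
  cbv beta. unfold Cnorm1. lra.
Qed.

Lemma v_bound x0 : inI a b x0 -> exists B, 0 <= B /\
  forall n s, inI a b s -> s <= x0 -> Cnorm1 (v s) <= B * Cnorm1 lam ^ n * Qpow n s.
Proof.
  intros Hx0.
  destruct (bounded_left_of_vanishing a b (fun t => Cnorm1 (v t)) x0 Hx0) as [B [HB Hb]].
  - intros x Hx. destruct (v_continuous x Hx). unfold Cnorm1.
    apply continuous_Rplus; apply continuous_Rabs_comp; auto.
  - exact (lim_at_left_end_C0_Cnorm1 a b v Hv0).
  - exists B. split; auto. pose proof (Cnorm1_ge_0 lam).
    induction n as [|n IH]; intros s Hs Hsx.
    + unfold Qpow; simpl. replace (B * 1 * (1 / 1)) with B by field. auto.
    + replace (B * Cnorm1 lam ^ S n * Qpow (S n) s)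
        with ((B * Cnorm1 lam ^ n * Cnorm1 lam) * Qpow (S n) s) by (simpl; ring).
      assert (0 <= B * Cnorm1 lam ^ n) by (apply Rmult_le_pos; auto; apply pow_le; auto).
      apply (v_bound_step _ n x0); auto; [apply Rmult_le_pos; auto|].
      intros y Hy Hyx.
      replace (B * Cnorm1 lam ^ n * Cnorm1 lam) with (Cnorm1 lam * (B * Cnorm1 lam ^ n)) by ring.
      apply (quasi_deriv_bound_step _ n x0); auto.
Qed.

Lemma trivial_data_solution_eq_C0 x : inI a b x -> v x = Defs.C0.
Proof.
  intros Hx. destruct (v_bound x Hx) as [B [HB Hb]].
  assert (HN : Cnorm1 (v x) <= 0).
  { apply Rnot_lt_le. intros Hpos.
    destruct (cv_speed_pow_fact (Cnorm1 lam * Q x) (Cnorm1 (v x) / (B + 1))) as [N HN].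
    { apply Rdiv_lt_0_compat; lra. }
    specialize (HN N (le_n N)). unfold Rdist in HN. rewrite Rminus_0_r in HN.
    specialize (Hb N x Hx (Rle_refl x)). unfold Qpow in Hb. rewrite Rpow_mult_distr in HN.
    assert (0 <= Cnorm1 lam ^ N * Q x ^ N / INR (fact N)).
    { apply Rmult_le_pos.
      - apply Rmult_le_pos; apply pow_le; [apply Cnorm1_ge_0|apply Q_ge_0; auto].
      - left; apply Rinv_0_lt_compat, INR_fact_lt_0. }
    rewrite Rabs_right in HN by lra.
    replace (B * Cnorm1 lam ^ N * (Q x ^ N / INR (fact N)))
      with (B * (Cnorm1 lam ^ N * Q x ^ N / INR (fact N))) in Hb by (unfold Rdiv; ring).
    assert (B * (Cnorm1 lam ^ N * Q x ^ N / INR (fact N)) <= B * (Cnorm1 (v x) / (B + 1)))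
      by (apply Rmult_le_compat_l; lra).
    assert (B * (Cnorm1 (v x) / (B + 1)) < Cnorm1 (v x)).
    { apply (Rmult_lt_reg_r (B + 1)); [lra|]. unfold Rdiv.
      replace (B * (Cnorm1 (v x) * / (B + 1)) * (B + 1)) with (B * Cnorm1 (v x)) by (field; lra).
      nra. }
    lra. }
  unfold Cnorm1 in HN. pose proof (Rabs_pos (fst (v x))). pose proof (Rabs_pos (snd (v x))).
  destruct (v x) as [v1 v2]; cbn [fst snd] in *. unfold Defs.C0.
  f_equal; apply Rabs_eq_0; lra.
Qed.

End TrivialData.

Lemma solves_bvp_unique lam w : solves_bvp a b p r lam w ->
  forall x, inI a b x -> w x = w_sol lam x.
Proof.
  intros [dw [Hs [Hw1 Hpdw0]]] x Hx.
  assert (E : Csub (w x) (w_sol lam x) = Defs.C0).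
  { apply (trivial_data_solution_eq_C0 lam (fun y => Csub (w y) (w_sol lam y))
           (fun y => Csub (dw y) (dw_sol lam y))); auto.
    - exact (solves_Csub a b p r lam _ _ _ _ Hs (w_sol_solves lam)).
    - replace Defs.C0 with (Csub Defs.C1 Defs.C1)
        by (unfold Csub, Defs.C0, Defs.C1; simpl; f_equal; ring).
      apply lim_at_left_end_Csub; auto. apply w_sol_tends_to_1.
    - replace Defs.C0 with (Csub Defs.C0 Defs.C0) by (unfold Csub, Defs.C0; simpl; f_equal; ring).
      eapply lim_at_left_end_ext;
        [|exact (lim_at_left_end_Csub a b _ _ _ _ Hpdw0 (quasi_deriv_w_sol_tends_to_0 lam))].
      intros y _. unfold Csub; cbn [fst snd]. f_equal; ring. }
  destruct (w x) as [w1 w2], (w_sol lam x) as [W1 W2]. unfold Csub, Defs.C0 in E.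
  injection E. intros. f_equal; lra.
Qed.

End Main.

Lemma Rint_RInt (f : R -> R) u v : ex_RInt f u v -> Rint f u v = RInt f u v.
Proof.
  intros H. unfold Rint.
  destruct (epsilon_spec (inhabits 0)
              (fun I => exists pr : Riemann_integrable f u v, RiemannInt pr = I)) as [pr Hpr].
  { exists (RiemannInt (ex_RInt_Reals_0 f u v H)). eexists. reflexivity. }
  rewrite <- Hpr. symmetry. apply RInt_Reals.
Qed.

Lemma loc_AC_with_AC_deriv_continuous a b (f : R -> R) :
  loc_AC_with_AC_deriv a b f -> forall x, inI a b x -> continuous f x.
Proof.
  intros [_ [f' [Hd _]]] x Hx. eapply is_derive_continuous. apply is_derive_Reals. apply Hd; auto.
Qed.

Lemma integrability_hyp_RInt a b (p r : R -> R) :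
  (forall x, inI a b x -> 0 < p x) ->
  (forall x, inI a b x -> continuous p x) -> (forall x, inI a b x -> continuous r x) ->
  integrability_hyp a b p r -> exists c M, inI a b c /\ forall t, inI a b t -> t <= c ->
    RInt (fun y => RInt (fun s => / p s) y c * r y) t c <= M.
Proof.
  intros Hp Hcp Hcr [c [Hc [M HM]]]. exists c, M. split; auto. intros t Ht Htc.
  assert (Hinv : forall x, inI a b x -> continuous (fun s => / p s) x).
  { intros x Hx. apply continuous_Rinv_comp; auto. specialize (Hp x Hx); lra. }
  assert (Hext : forall y, Rmin t c < y < Rmax t c ->
            RInt (fun s => / p s) y c * r y = Rint (fun s => / p s) y c * r y).
  { intros y Hy. rewrite Rint_RInt; [reflexivity|]. apply (ex_RInt_inI a b); auto.
    apply (inI_between_min_max a b t c); auto; lra. }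
  assert (Hex : ex_RInt (fun y => RInt (fun s => / p s) y c * r y) t c).
  { apply (ex_RInt_inI a b); auto. intros y Hy. apply continuous_Rmult; auto.
    eapply is_derive_continuous. apply (is_derive_RInt_inI' a b); auto. }
  specialize (HM t Ht Htc). rewrite Rint_RInt in HM.
  - rewrite <- (RInt_ext _ _ t c Hext) in HM. exact HM.
  - exact (ex_RInt_ext _ _ t c Hext Hex).
Qed.

Theorem mainTheorem1 (a b : option R) (p r : R -> R)
  (hab : forall a0 b0, a = Some a0 -> b = Some b0 -> a0 < b0)
  (hp : forall x, inI a b x -> 0 < p x)
  (hr : forall x, inI a b x -> 0 < r x)
  (hpAC : loc_AC_with_AC_deriv a b p)
  (hrAC : loc_AC_with_AC_deriv a b r)
  (hint : integrability_hyp a b p r) :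
  exists W : Cplx -> R -> Cplx,
    (forall lam : Cplx,
       solves_bvp a b p r lam (W lam) /\
       forall w, solves_bvp a b p r lam w -> forall x, inI a b x -> w x = W lam x) /\
    (forall x, inI a b x ->
       entire (fun lam => W lam x) /\ exponential_type (fun lam => W lam x)).
Proof.
  pose proof (loc_AC_with_AC_deriv_continuous a b p hpAC) as hpc.
  pose proof (loc_AC_with_AC_deriv_continuous a b r hrAC) as hrc.
  destruct (integrability_hyp_RInt a b p r hp hpc hrc hint) as [c [M [hc hM]]].
  exists (w_sol a b p r). split.
  - intros lam. split.
    + exists (dw_sol a b p r lam). split; [|split].
      * exact (w_sol_solves a b p r c M hp hr hpc hrc hc hM lam).
      * exact (w_sol_tends_to_1 a b p r c M hp hr hpc hrc hc hM lam).
      * exact (quasi_deriv_w_sol_tends_to_0 a b p r c M hp hr hpc hrc hc hM lam).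
    + exact (solves_bvp_unique a b p r c M hp hr hpc hrc hc hM lam).
  - exact (w_sol_entire_exponential_type a b p r c M hp hr hpc hrc hc hM).
Qed.
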